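(* Under Strategy 2A (described in the context), let $V(\omega)$ be the number of uncles created during the attack cycle $\omega$ that are referred by nephew blocks in an attack cycle strictly after $\omega$. Then $$\mathbb{E}[V]=pq^2\cdot\frac{1-(pq)^{n_1-1}}{1-pq}.$$
   Context: Honest hashrate $p$, attacker hashrate $q$, $p+q=1$, $0<q<p$; $\gamma\in[0,1]$ is the fraction of honest hashrate mining on the attacker's block during a public competition between equal-height blocks. Attack cycles are i.i.d. words in S (attacker block) and H (honest block): H, SHS, SHH, or SSwH with $w$ a Dyck word; $\mathbb{P}[H]=p$, $\mathbb{P}[SHS]=pq^2$, $\mathbb{P}[SHH]=p^2q$, $\mathbb{P}[SSwH]=q^2p(pq)^{|w|}$ ($|w|$ half the length of $w$). Ethereum rules: an uncle is a non-official block whose parent is official; a nephew (official block) may refer an uncle at distance (height difference) at most $n_1$ ($n_1\ge2$ an integer). Strategy 2A (''brutal fork''): the attacker keeps his whole fork secret and releases it all at once at the end of the attack cycle, when an honest block would reduce his advance to one block (after a single attacker block, he publishes it to compete with the honest block); the attacker's fork wins in cycles starting with SS; all miners refer all possible uncles. *)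

From Stdlib Require Import Reals List Arith Bool.
Open Scope bool_scope.
Import ListNotations.

(** Each newly mined block is an i.i.d. letter:
   - [LA]  : block mined by the attacker                      (prob. q)
   - [LHg] : block mined by the fraction gamma of the honest
             hashrate which, during a public competition between
             two equal-height tips, mines on the attacker's block (prob. p*gamma)
   - [LHn] : block mined by the remaining honest hashrate     (prob. p*(1-gamma))
   Summing over [LHg]/[LHn] gives the letter H of the paper (prob. p). *)
Inductive letter := LA | LHg | LHn.

(** A block: height, parent id ([None] only for the genesis block),
    miner, index of the attack cycle during which it was mined
    (0 for the genesis block, cycles numbered 1,2,...), and the list of
    block ids it refers to as uncles. Block ids are positions in the
    list of all blocks (in mining order). *)
Record block := mkBlock {
  b_height : nat;
  b_parent : option nat;
  b_attacker : bool;
  b_cycle : nat;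
  b_refs : list nat }.

Definition get (bs : list block) (i : nat) : option block := nth_error bs i.

Definition height (bs : list block) (i : nat) : nat :=
  match get bs i with Some b => b_height b | None => 0%nat end.

Definition refs (bs : list block) (i : nat) : list nat :=
  match get bs i with Some b => b_refs b | None => [] end.

Definition parent (bs : list block) (i : nat) : option nat :=
  match get bs i with Some b => b_parent b | None => None end.

Definition cycle_of (bs : list block) (i : nat) : nat :=
  match get bs i with Some b => b_cycle b | None => 0%nat end.

Fixpoint ancestors_fuel (bs : list block) (fuel i : nat) : list nat :=
  match fuel with
  | O => [i]
  | S f => i :: match parent bs i with
                | Some j => ancestors_fuel bs f j
                | None => []
                end
  end.

Definition ancestors (bs : list block) (i : nat) : list nat :=
  ancestors_fuel bs (length bs) i.

Definition memb (i : nat) (l : list nat) : bool := existsb (Nat.eqb i) l.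

Inductive phase :=
  | Idle                          (* no fork: attacker mines on the official tip *)
  | One (a : nat)                 (* attacker has one secret block [a] *)
  | Tie (a h : nat)               (* public competition: attacker block [a] vs honest block [h] *)
  | Fork (ach hch : list nat).    (* attacker secret chain [ach] (>= 2 blocks),
                                     public honest chain [hch]; most recent first *)

Record state := mkState {
  st_blocks : list block;
  st_secret : list nat;   (* unpublished attacker blocks *)
  st_tip : nat;           (* official tip at the start of the current cycle *)
  st_cycle : nat;
  st_phase : phase }.

(** Uncles referred by a new block mined on [par] at height [hb]:
    "all miners refer all possible uncles" (Ethereum rules): every block [u]
    visible to the miner whose parent is an ancestor of the new block, which
    is not itself an ancestor, whose distance to the new block is at most
    [n1], and which has not already been referred by an ancestor. *)
Definition uncle_refs (n1 : nat) (bs : list block) (secret : list nat)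
    (attacker : bool) (par hb : nat) : list nat :=
  let anc := ancestors bs par in
  filter (fun u =>
    (attacker || negb (memb u secret)) &&
    match parent bs u with Some x => memb x anc | None => false end &&
    negb (memb u anc) &&
    Nat.leb (hb - height bs u) n1 &&
    forallb (fun a => negb (memb u (refs bs a))) anc)
    (seq 0 (length bs)).

Definition mine (n1 : nat) (st : state) (par : nat) (attacker : bool)
    : list block * nat :=
  let bs := st_blocks st in
  let hb := S (height bs par) in
  let b := mkBlock hb (Some par) attacker (st_cycle st)
             (uncle_refs n1 bs (st_secret st) attacker par hb) in
  (bs ++ [b], length bs).

Definition step (n1 : nat) (st : state) (l : letter) : state :=
  let t := st_tip st in
  let c := st_cycle st in
  match st_phase st, l with
  | Idle, LA =>
      let (bs, a) := mine n1 st t true in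
      mkState bs (a :: st_secret st) t c (One a)
  | Idle, _ =>
      let (bs, h) := mine n1 st t false in
      mkState bs (st_secret st) h (S c) Idle
  | One a, LA =>
      let (bs, a2) := mine n1 st a true in
      mkState bs (a2 :: st_secret st) t c (Fork [a2; a] [])
  | One a, _ =>
      (* honest block on the public tip; the attacker then publishes [a] *)
      let (bs, h) := mine n1 st t false in
      mkState bs [] t c (Tie a h)
  | Tie a h, LA =>
      let (bs, a2) := mine n1 st a true in
      mkState bs (st_secret st) a2 (S c) Idle
  | Tie a h, LHg =>
      let (bs, x) := mine n1 st a false in
      mkState bs (st_secret st) x (S c) Idle
  | Tie a h, LHn =>
      let (bs, x) := mine n1 st h false in
      mkState bs (st_secret st) x (S c) Idle
  | Fork ach hch, LA =>
      let (bs, a2) := mine n1 st (hd t ach) true in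
      mkState bs (a2 :: st_secret st) t c (Fork (a2 :: ach) hch)
  | Fork ach hch, _ =>
      let (bs, h) := mine n1 st (hd t hch) false in
      if Nat.eqb (length ach - S (length hch)) 1
      then (* advance reduced to one block: release the whole fork, attacker wins *)
        mkState bs [] (hd t ach) (S c) Idle
      else mkState bs (st_secret st) t c (Fork ach (h :: hch))
  end.

Definition genesis : block := mkBlock 0 None false 0 [].

Definition init_state : state := mkState [genesis] [] 0 1 Idle.

Definition run (n1 : nat) (u : list letter) : state :=
  fold_left (step n1) u init_state.

(** [u] consists of exactly [k] complete attack cycles. *)
Definition complete_cycles (n1 : nat) (u : list letter) (k : nat) : bool :=
  let fin := run n1 u in
  match st_phase fin with
  | Idle => Nat.eqb (st_cycle fin) (S k)
  | _ => false
  end.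

Definition official (fin : state) (i : nat) : bool :=
  memb i (ancestors (st_blocks fin) (st_tip fin)).

Definition is_uncle (fin : state) (i : nat) : bool :=
  negb (official fin i) &&
  match parent (st_blocks fin) i with Some x => official fin x | None => false end.

Definition V (n1 : nat) (u : list letter) : nat :=
  let fin := run n1 u in
  let bs := st_blocks fin in
  let ids := seq 0 (length bs) in
  length (filter (fun i =>
    is_uncle fin i && Nat.eqb (cycle_of bs i) 1 &&
    existsb (fun j => official fin j && Nat.leb 2 (cycle_of bs j)
                      && memb i (refs bs j)) ids) ids).

Fixpoint words (N : nat) : list (list letter) :=
  match N with
  | O => [[]]
  | S n => flat_map (fun w => [LA :: w; LHg :: w; LHn :: w]) (words n)
  end.

Definition lprob (p q gamma : R) (l : letter) : R :=
  match l with
  | LA => q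
  | LHg => (p * gamma)%R
  | LHn => (p * (1 - gamma))%R
  end.

Definition wprob (p q gamma : R) (u : list letter) : R :=
  fold_right Rmult 1%R (map (lprob p q gamma) u).

(** Contribution to E[V] of the histories of exactly [m+1] complete attack
    cycles (the first cycle and [m] later ones) consisting of [N] blocks. *)
Definition EV_term (n1 : nat) (p q gamma : R) (m N : nat) : R :=
  fold_right Rplus 0%R
    (map (fun u => if complete_cycles n1 u (S m)
                   then (wprob p q gamma u * INR (V n1 u))%R else 0%R)
         (words N)).

(* Under Strategy 2A an uncle mined in the first cycle can be referred in a later cycle
   only if it is still referable from the official tip at the end of that cycle, and then
   the first later block built on this tip refers it. This happens exactly when the first
   cycle is S^L H^(L-1) with 2 <= L <= n1: the attacker releases a fork of length L and the
   first honest block becomes an uncle at distance L from the next official block, never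
   referred during the cycle because every attacker block precedes it. In any other cycle
   the uncle, if there is one, is referred within the cycle or is already too far. Hence
   E[V] = sum_(L=2..n1) q^L p^(L-1).
   The series over histories of N blocks converges to this value because the probability
   of not having completed m+1 cycles after N blocks decays geometrically: a potential
   argument gives N <= 2 #S + m for such histories, and E[t^(2 #S - N)] = ((q t^2 + p) / t)^N
   with (q t^2 + p) / t = 1/2 + 2pq < 1 for t = 1 / (2q). *)

From Stdlib Require Import Reals Lra Lia List Arith Bool Classical.
Import ListNotations.

Open Scope R_scope.

(** * Sums over words *)

Definition sum_list (l : list R) : R := fold_right Rplus 0 l.

Lemma sum_list_app (l1 l2 : list R) : sum_list (l1 ++ l2) = sum_list l1 + sum_list l2.
Proof. unfold sum_list. induction l1 as [|x l1 IH]; cbn; [lra|]. rewrite IH; lra. Qed.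

Section SumListMap.
Variable A : Type.
Implicit Types (f g : A -> R) (l : list A).

Lemma sum_list_map_ext_in f g l :
  (forall x, In x l -> f x = g x) -> sum_list (map f l) = sum_list (map g l).
Proof. intros H. f_equal. now apply map_ext_in. Qed.

Lemma sum_list_map_add f g l :
  sum_list (map (fun x => f x + g x) l) = sum_list (map f l) + sum_list (map g l).
Proof. unfold sum_list. induction l as [|x l IH]; cbn; [lra|]. rewrite IH; lra. Qed.

Lemma sum_list_map_scal c f l :
  sum_list (map (fun x => c * f x) l) = c * sum_list (map f l).
Proof. unfold sum_list. induction l as [|x l IH]; cbn; [lra|]. rewrite IH; lra. Qed.

Lemma sum_list_map_le f g l :
  (forall x, In x l -> f x <= g x) -> sum_list (map f l) <= sum_list (map g l).
Proof.
  induction l as [|x l IH]; intros H; cbn; [lra|].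
  apply Rplus_le_compat; [apply H; now left|]. apply IH. intros y Hy; apply H; now right.
Qed.

Lemma INR_length_filter (P : A -> bool) l :
  INR (length (filter P l)) = sum_list (map (fun x => if P x then 1 else 0) l).
Proof.
  induction l as [|x l IH]; [reflexivity|].
  unfold sum_list in *; cbn. destruct (P x); cbn [length]; rewrite ?S_INR, IH; ring.
Qed.

End SumListMap.

Definition sum_words (n : nat) (F : list letter -> R) : R := sum_list (map F (words n)).

Lemma In_words_length n u : In u (words n) -> length u = n.
Proof.
  revert u; induction n as [|n IH]; cbn; intros u Hu.
  - now destruct Hu as [<-|[]].
  - apply in_flat_map in Hu as [w [Hw Hu]].
    destruct Hu as [<-|[<-|[<-|[]]]]; cbn; now rewrite (IH w Hw).
Qed.

Lemma sum_words_O F : sum_words 0 F = F [].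
Proof. unfold sum_words, sum_list; cbn; lra. Qed.

Lemma sum_words_S n F :
  sum_words (S n) F = sum_words n (fun w => F (LA :: w) + F (LHg :: w) + F (LHn :: w)).
Proof.
  unfold sum_words, sum_list; cbn. induction (words n) as [|w ws IH]; cbn; [lra|].
  rewrite IH. lra.
Qed.

Lemma sum_words_ext_len n F G :
  (forall u, length u = n -> F u = G u) -> sum_words n F = sum_words n G.
Proof. intros H. apply sum_list_map_ext_in. intros u Hu. now apply H, In_words_length. Qed.

Lemma sum_words_ext n F G : (forall u, F u = G u) -> sum_words n F = sum_words n G.
Proof. intros H; apply sum_words_ext_len; intros; apply H. Qed.

Lemma sum_words_add n F G : sum_words n (fun u => F u + G u) = sum_words n F + sum_words n G.
Proof. apply sum_list_map_add. Qed.

Lemma sum_words_scal n c F : sum_words n (fun u => c * F u) = c * sum_words n F.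
Proof. apply sum_list_map_scal. Qed.

Lemma sum_words_le n F G :
  (forall u, length u = n -> F u <= G u) -> sum_words n F <= sum_words n G.
Proof. intros H. apply sum_list_map_le. intros u Hu. now apply H, In_words_length. Qed.

Lemma sum_words_add_len a b F :
  sum_words (a + b) F = sum_words a (fun v => sum_words b (fun w => F (v ++ w))).
Proof.
  revert F; induction a as [|a IH]; intros F.
  - now rewrite sum_words_O.
  - cbn [Nat.add]. rewrite sum_words_S, IH, sum_words_S. apply sum_words_ext. intros v.
    now rewrite <- !sum_words_add.
Qed.

Lemma sum_words_sum_list {A} n (P : list letter -> R) (g : A -> list letter -> R) l :
  sum_words n (fun u => P u * sum_list (map (fun x => g x u) l)) =
  sum_list (map (fun x => sum_words n (fun u => P u * g x u)) l).
Proof.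
  induction l as [|x l IH]; cbn.
  - rewrite (sum_words_ext n _ (fun u => 0 * P u)) by (intros; unfold sum_list; cbn; ring).
    rewrite sum_words_scal. unfold sum_list; cbn. ring.
  - unfold sum_list in *; cbn. rewrite <- IH, <- sum_words_add. apply sum_words_ext. intros; ring.
Qed.

Definition is_H (l : letter) : bool := match l with LA => false | _ => true end.

Fixpoint count_A (u : list letter) : nat :=
  match u with [] => O | LA :: w => S (count_A w) | _ :: w => count_A w end.

Fixpoint count_H (u : list letter) : nat :=
  match u with [] => O | LA :: w => count_H w | _ :: w => S (count_H w) end.

Lemma count_A_add_count_H u : (count_A u + count_H u)%nat = length u.
Proof. induction u as [|[] u IH]; cbn; lia. Qed.

Lemma count_A_app u v : count_A (u ++ v) = (count_A u + count_A v)%nat.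
Proof. induction u as [|[] u IH]; cbn; lia. Qed.

Lemma count_H_app u v : count_H (u ++ v) = (count_H u + count_H v)%nat.
Proof. induction u as [|[] u IH]; cbn; lia. Qed.

Fixpoint starts_H (b : nat) (u : list letter) : bool :=
  match b, u with
  | O, _ => true
  | S b', l :: w => is_H l && starts_H b' w
  | S _, [] => false
  end.

Fixpoint starts_AH (a b : nat) (u : list letter) : bool :=
  match a, u with
  | O, _ => starts_H b u
  | S a', LA :: w => starts_AH a' b w
  | S _, _ => false
  end.

Section WordProbability.
Variables p q gamma : R.

Lemma wprob_cons l u : wprob p q gamma (l :: u) = lprob p q gamma l * wprob p q gamma u.
Proof. reflexivity. Qed.

Lemma wprob_app v w : wprob p q gamma (v ++ w) = wprob p q gamma v * wprob p q gamma w.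
Proof.
  induction v as [|l v IH]; cbn [app]; [unfold wprob; cbn; ring|].
  rewrite !wprob_cons, IH. ring.
Qed.

Lemma wprob_ge0 u : 0 <= p -> 0 <= q -> 0 <= gamma <= 1 -> 0 <= wprob p q gamma u.
Proof.
  intros Hp Hq Hg. induction u as [|l u IH]; [unfold wprob; cbn; lra|].
  rewrite wprob_cons. apply Rmult_le_pos; auto. destruct l; cbn; nra.
Qed.

Lemma sum_words_wprob_pow s n :
  sum_words n (fun u => wprob p q gamma u * s ^ count_A u) = (q * s + p) ^ n.
Proof.
  induction n as [|n IH].
  - rewrite sum_words_O. unfold wprob; cbn; ring.
  - rewrite sum_words_S, <- tech_pow_Rmult, <- IH, <- sum_words_scal.
    apply sum_words_ext. intros w.
    rewrite !wprob_cons. cbn. ring.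
Qed.

Hypothesis p_add_q : p + q = 1.

Lemma sum_words_wprob n : sum_words n (wprob p q gamma) = 1.
Proof.
  rewrite (sum_words_ext n _ (fun u => wprob p q gamma u * 1 ^ count_A u)).
  - rewrite sum_words_wprob_pow. replace (q * 1 + p) with 1 by lra. apply pow1.
  - intros u. rewrite pow1. ring.
Qed.

Lemma sum_words_starts_AH a b M : (a + b <= M)%nat ->
  sum_words M (fun u => wprob p q gamma u * (if starts_AH a b u then 1 else 0)) = q ^ a * p ^ b.
Proof.
  revert a b. induction M as [|M IH]; intros a b Hab.
  - replace a with O by lia; replace b with O by lia.
    rewrite sum_words_O. unfold wprob; cbn; ring.
  - rewrite sum_words_S. destruct a as [|a]; [destruct b as [|b]|].
    + rewrite (sum_words_ext M _ (wprob p q gamma)), sum_words_wprob; [cbn; ring|].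
      intros w. rewrite !wprob_cons. cbn. replace q with (1 - p) by lra. ring.
    + rewrite (sum_words_ext M _ (fun w =>
        p * (wprob p q gamma w * (if starts_AH 0 b w then 1 else 0)))).
      * rewrite sum_words_scal, IH by lia. cbn. ring.
      * intros w. rewrite !wprob_cons. cbn. ring.
    + rewrite (sum_words_ext M _ (fun w =>
        q * (wprob p q gamma w * (if starts_AH a b w then 1 else 0)))).
      * rewrite sum_words_scal, IH by lia. cbn. ring.
      * intros w. rewrite !wprob_cons. cbn. ring.
Qed.

End WordProbability.

Open Scope nat_scope.

(** * Counting attack cycles *)

Inductive aphase := AIdle | AOne | ATie | AFork (na nh : nat).

Definition astep (s : aphase * nat) (l : letter) : aphase * nat :=
  let (ph, c) := s in
  match ph, l with
  | AIdle, LA => (AOne, c)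
  | AIdle, _ => (AIdle, S c)
  | AOne, LA => (AFork 2 0, c)
  | AOne, _ => (ATie, c)
  | ATie, _ => (AIdle, S c)
  | AFork na nh, LA => (AFork (S na) nh, c)
  | AFork na nh, _ => if Nat.eqb (na - S nh) 1 then (AIdle, S c) else (AFork na (S nh), c)
  end.

Definition afold (s : aphase * nat) (w : list letter) : aphase * nat := fold_left astep w s.
Definition arun (w : list letter) : aphase * nat := afold (AIdle, 1) w.
Definition cycles (w : list letter) : nat := snd (arun w).

Definition completes (w : list letter) (k : nat) : bool :=
  match arun w with (AIdle, c) => Nat.eqb c (S k) | _ => false end.

Definition abstract (s : state) : aphase * nat :=
  (match st_phase s with
   | Idle => AIdle | One _ => AOne | Tie _ _ => ATie
   | Fork ach hch => AFork (length ach) (length hch) end, st_cycle s).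

Lemma abstract_step n1 s l : abstract (step n1 s l) = astep (abstract s) l.
Proof.
  destruct s as [bs sec t c [|a|a h|ach hch]]; destruct l; try reflexivity;
  cbn; now destruct (Nat.eqb (length ach - S (length hch)) 1).
Qed.

Lemma abstract_run n1 w : abstract (run n1 w) = arun w.
Proof.
  unfold run, arun, afold. change (AIdle, 1) with (abstract init_state).
  generalize init_state. induction w as [|l w IH]; intros s; cbn; [reflexivity|].
  now rewrite IH, abstract_step.
Qed.

Lemma complete_cycles_completes n1 u k : complete_cycles n1 u k = completes u k.
Proof.
  unfold complete_cycles, completes. rewrite <- (abstract_run n1 u).
  unfold abstract. now destruct (st_phase (run n1 u)).
Qed.

Lemma st_cycle_run n1 w : st_cycle (run n1 w) = cycles w.
Proof. unfold cycles. now rewrite <- (abstract_run n1 w). Qed.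

Lemma run_snoc n1 w l : run n1 (w ++ [l]) = step n1 (run n1 w) l.
Proof. unfold run. now rewrite fold_left_app. Qed.

Lemma completes_iff w k : completes w k = true <-> arun w = (AIdle, S k).
Proof.
  unfold completes. destruct (arun w) as [[| | |] c]; split; try discriminate.
  - now intros ->%Nat.eqb_eq.
  - intros [= ->]. apply Nat.eqb_refl.
Qed.

Lemma arun_app w1 w2 : arun (w1 ++ w2) = afold (arun w1) w2.
Proof. apply fold_left_app. Qed.

Lemma arun_snoc w l : arun (w ++ [l]) = astep (arun w) l.
Proof. now rewrite arun_app. Qed.

Lemma astep_cases s l :
  (snd (astep s l) = snd s /\ fst (astep s l) <> AIdle) \/
  (snd (astep s l) = S (snd s) /\ fst (astep s l) = AIdle).
Proof.
  destruct s as [[| | |na nh] c]; destruct l; cbn; auto;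
    try (left; split; [reflexivity|discriminate]).
  all: destruct (Nat.eqb (na - S nh) 1); cbn; auto; left; split; [reflexivity|discriminate].
Qed.

Lemma cycles_snoc w l :
  cycles (w ++ [l]) = cycles w \/
  (cycles (w ++ [l]) = S (cycles w) /\ fst (arun (w ++ [l])) = AIdle).
Proof. unfold cycles. rewrite arun_snoc. destruct (astep_cases (arun w) l); tauto. Qed.

Lemma cycles_le_app w w' : cycles w <= cycles (w ++ w').
Proof.
  induction w' as [|l w' IH] using rev_ind; [now rewrite app_nil_r|].
  rewrite app_assoc. destruct (cycles_snoc (w ++ w') l) as [E|[E _]]; lia.
Qed.

Lemma cycles_ge_1 w : 1 <= cycles w.
Proof. apply (cycles_le_app []). Qed.

Lemma firstn_le_app {A} (u : list A) k k' : k <= k' ->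
  exists w, firstn k' u = firstn k u ++ w.
Proof.
  intros Hk. exists (skipn k (firstn k' u)).
  rewrite <- (firstn_skipn k (firstn k' u)) at 1.
  now rewrite firstn_firstn, Nat.min_l.
Qed.

Lemma cycles_firstn_le u k k' : k <= k' -> cycles (firstn k u) <= cycles (firstn k' u).
Proof. intros H. destruct (firstn_le_app u k k' H) as [w ->]. apply cycles_le_app. Qed.

Lemma firstn_snoc_le {A} (u : list A) x N : N <= length u -> firstn N (u ++ [x]) = firstn N u.
Proof. intros H. rewrite firstn_app. replace (N - length u) with 0 by lia. apply app_nil_r. Qed.

Lemma completes_prefix u m :
  S m <= cycles u -> exists N, N <= length u /\ completes (firstn N u) m = true.
Proof.
  induction u as [|l u IH] using rev_ind; intros H.
  - exists 0. unfold cycles in H; cbn in H. split; [reflexivity|].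
    now replace m with 0 by lia.
  - rewrite length_app; cbn.
    destruct (le_lt_dec (S m) (cycles u)) as [Le|Lt].
    + destruct (IH Le) as [N [HN C]]. exists N. split; [lia|]. now rewrite firstn_snoc_le.
    + exists (length u + 1). rewrite firstn_all2 by (rewrite length_app; cbn; lia).
      split; [lia|]. apply completes_iff.
      destruct (cycles_snoc u l) as [E|[E Hidle]]; [lia|].
      unfold cycles in *. destruct (arun (u ++ [l])) as [ph c]; cbn in *. subst. f_equal. lia.
Qed.

Lemma completes_unique u k N1 N2 :
  completes (firstn N1 u) k = true -> completes (firstn N2 u) k = true ->
  N1 <= length u -> N2 <= length u -> N1 = N2.
Proof.
  revert N1 N2.
  enough (Lt : forall N1 N2, N1 < N2 -> N2 <= length u ->
    completes (firstn N1 u) k = true -> completes (firstn N2 u) k = true -> False).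
  { intros N1 N2 C1 C2 H1 H2.
    destruct (Nat.lt_trichotomy N1 N2) as [H|[H|H]]; auto; exfalso; eauto. }
  intros N1 N2 Hlt H2 C1 C2. apply completes_iff in C1, C2.
  destruct (firstn_le_app u N1 N2) as [w Hw]; [lia|].
  destruct w as [|l w] using rev_ind.
  - apply (f_equal (@length letter)) in Hw. rewrite app_nil_r, !length_firstn in Hw. lia.
  - rewrite Hw, app_assoc in C2.
    pose proof (cycles_le_app (firstn N1 u) w) as Mono.
    destruct (cycles_snoc (firstn N1 u ++ w) l) as [E|[E _]]; unfold cycles in *;
      rewrite C2, ?C1 in *; cbn in *; [|lia].
    rewrite arun_snoc in C2.
    destruct (astep_cases (arun (firstn N1 u ++ w)) l) as [[_ A]|[B _]];
      rewrite C2 in *; cbn in *; [congruence|lia].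
Qed.

Definition potential (ph : aphase) : nat :=
  match ph with AIdle => 0 | AOne => 1 | ATie => 0 | AFork na nh => na - nh end.

(* Only attacker blocks raise the potential; every honest block lowers it or ends a cycle. *)
Lemma potential_bound w :
  count_H w + potential (fst (arun w)) + 1 <= count_A w + cycles w /\
  (forall na nh, fst (arun w) = AFork na nh -> nh + 2 <= na).
Proof.
  induction w as [|l w IH] using rev_ind.
  - cbn. split; [lia|]. discriminate.
  - unfold cycles in *. rewrite arun_snoc, count_A_app, count_H_app.
    destruct IH as [IH1 IH2]. destruct (arun w) as [ph c]; cbn [fst snd] in *.
    destruct ph as [| | |na nh]; destruct l; cbn [astep potential fst snd count_A count_H] in *;
      try specialize (IH2 _ _ eq_refl);
      try (destruct (Nat.eqb (na - S nh) 1) eqn:Eq; cbn [potential fst snd];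
           [apply Nat.eqb_eq in Eq|apply Nat.eqb_neq in Eq]);
      (split; [lia|]); intros ? ? [= <- <-]; lia.
Qed.

Lemma length_bound_incomplete u m :
  (forall N, N <= length u -> completes (firstn N u) m = false) ->
  S (length u) <= 2 * count_A u + m.
Proof.
  intros H.
  assert (Hc : cycles u <= m).
  { destruct (le_lt_dec (cycles u) m) as [Le|Lt]; [exact Le|].
    destruct (completes_prefix u m Lt) as [N [HN C]]. now rewrite H in C. }
  destruct (potential_bound u) as [P _]. pose proof (count_A_add_count_H u). lia.
Qed.

(** * First cycles of the form S^L H^(L-1) *)

Definition honest_to_LHg (l : letter) : letter := match l with LA => LA | _ => LHg end.

Lemma afold_honest_to_LHg s w : afold s w = afold s (map honest_to_LHg w).
Proof.
  revert s; induction w as [|l w IH]; intros s; [reflexivity|].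
  cbn. unfold afold in *; cbn. rewrite <- IH. f_equal.
  destruct s as [[| | |na nh] c]; now destruct l.
Qed.

Lemma starts_AH_honest_to_LHg a b u : starts_AH a b u = true ->
  map honest_to_LHg (firstn (a + b) u) = repeat LA a ++ repeat LHg b.
Proof.
  revert u; induction a as [|a IH]; intros u H.
  - cbn in *. revert u H; induction b as [|b IHb]; intros [|l u] H; try easy.
    apply andb_true_iff in H as [Hl H]. cbn. rewrite IHb by exact H. now destruct l.
  - destruct u as [|[] u]; try discriminate. cbn. now rewrite IH.
Qed.

Lemma afold_fork_A na nh c k : afold (AFork na nh, c) (repeat LA k) = (AFork (na + k) nh, c).
Proof.
  revert na; induction k as [|k IH]; intros na; [now rewrite Nat.add_0_r|].
  unfold afold in *; cbn. rewrite IH. do 2 f_equal. lia.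
Qed.

Lemma afold_fork_H na nh c k : nh + k <= na - 2 ->
  afold (AFork na nh, c) (repeat LHg k) = (AFork na (nh + k), c).
Proof.
  revert nh; induction k as [|k IH]; intros nh Hk; [now rewrite Nat.add_0_r|].
  unfold afold in *; cbn. destruct (Nat.eqb (na - S nh) 1) eqn:E; [apply Nat.eqb_eq in E; lia|].
  rewrite IH by lia. do 2 f_equal. lia.
Qed.

Lemma arun_repeat_A L : 2 <= L -> arun (repeat LA L) = (AFork L 0, 1).
Proof.
  intros HL. replace L with (2 + (L - 2)) by lia.
  rewrite repeat_app, arun_app. cbn [arun afold fold_left astep repeat app].
  change (fold_left astep (repeat LA (L - 2)) (AFork 2 0, 1))
    with (afold (AFork 2 0, 1) (repeat LA (L - 2))).
  now rewrite afold_fork_A.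
Qed.

Lemma arun_pattern L : 2 <= L ->
  arun (repeat LA L ++ repeat LHg (L - 1)) = (AIdle, 2) /\
  cycles (repeat LA L ++ repeat LHg (L - 2)) = 1.
Proof.
  intros HL. split.
  - replace (L - 1) with ((L - 2) + 1) by lia.
    rewrite repeat_app, app_assoc, !arun_app, arun_repeat_A, afold_fork_H by lia.
    cbn. now replace (L - S (L - 2)) with 1 by lia.
  - unfold cycles. now rewrite arun_app, arun_repeat_A, afold_fork_H by lia.
Qed.

Lemma starts_AH_S a b u : starts_AH a (S b) u = true -> starts_AH a b u = true.
Proof.
  revert u; induction a as [|a IH]; intros u H.
  - cbn in *. revert u H; induction b as [|b IHb]; intros [|l u] H; try easy.
    cbn in *. apply andb_true_iff in H as [-> H]. now apply IHb.
  - destruct u as [|[] u]; try discriminate. now apply IH.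
Qed.

Lemma starts_AH_arun L u : 2 <= L -> starts_AH L (L - 1) u = true ->
  arun (firstn (2 * L - 1) u) = (AIdle, 2) /\ cycles (firstn (2 * L - 2) u) = 1.
Proof.
  intros HL H.
  assert (H' : starts_AH L (L - 2) u = true)
    by (apply starts_AH_S; now replace (S (L - 2)) with (L - 1) by lia).
  unfold cycles, arun. rewrite !(afold_honest_to_LHg _ (firstn _ u)).
  replace (2 * L - 1) with (L + (L - 1)) by lia. replace (2 * L - 2) with (L + (L - 2)) by lia.
  rewrite !starts_AH_honest_to_LHg by assumption. now apply arun_pattern.
Qed.

Lemma starts_AH_app a b w r : starts_AH a b w = true -> starts_AH a b (w ++ r) = true.
Proof.
  revert w; induction a as [|a IH]; intros w H.
  - cbn in *. revert w H; induction b as [|b IHb]; intros [|l w] H; try easy.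
    cbn in *. apply andb_true_iff in H as [-> H]. now apply IHb.
  - destruct w as [|[] w]; try discriminate. now apply IH.
Qed.

Lemma starts_AH_firstn a b u N : a + b <= N ->
  starts_AH a b u = true -> starts_AH a b (firstn N u) = true.
Proof.
  revert u N; induction a as [|a IH]; intros u N HN H.
  - cbn in *. revert u N HN H; induction b as [|b IHb]; intros u N HN H; [reflexivity|].
    destruct u as [|l u]; [discriminate|]. destruct N as [|N]; [lia|]. cbn in *.
    apply andb_true_iff in H as [-> H]. apply IHb; [lia|exact H].
  - destruct u as [|[] u]; try discriminate. destruct N as [|N]; [lia|]. apply IH; [lia|exact H].
Qed.

Lemma starts_AH_lt_false a1 b1 a2 b2 u : a1 < a2 ->
  starts_AH a1 (S b1) u = true -> starts_AH a2 b2 u = false.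
Proof.
  revert a2 u; induction a1 as [|a1 IH]; intros [|a2] u Hlt H1; try lia.
  - now destruct u as [|[] u].
  - destruct u as [|[] u]; try discriminate. apply (IH a2); [lia|exact H1].
Qed.

Lemma starts_AH_unique L1 L2 u : 2 <= L1 -> 2 <= L2 ->
  starts_AH L1 (pred L1) u = true -> starts_AH L2 (pred L2) u = true -> L1 = L2.
Proof.
  intros H1 H2 S1 S2. destruct (Nat.lt_trichotomy L1 L2) as [H|[H|H]]; auto; exfalso.
  - replace (pred L1) with (S (L1 - 2)) in S1 by lia.
    now rewrite (starts_AH_lt_false _ _ _ _ _ H S1) in S2.
  - replace (pred L2) with (S (L2 - 2)) in S2 by lia.
    now rewrite (starts_AH_lt_false _ _ _ _ _ H S2) in S1.
Qed.

Fixpoint is_pure (w : list letter) : bool :=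
  match w with
  | [] => true
  | LA :: w' => is_pure w'
  | _ :: w' => Nat.eqb (count_A w') 0
  end.

Lemma is_pure_snoc_A w : is_pure (w ++ [LA]) = is_pure w && Nat.eqb (count_H w) 0.
Proof.
  induction w as [|[] w IH]; cbn; auto; rewrite count_A_app; cbn; now destruct (count_A w).
Qed.

Lemma is_pure_snoc_H w l : is_H l = true -> is_pure (w ++ [l]) = is_pure w.
Proof.
  intros Hl. induction w as [|[] w IH]; cbn; auto; rewrite ?count_A_app;
    destruct l; try discriminate; cbn; now rewrite ?Nat.add_0_r.
Qed.

Lemma is_pure_starts_AH w r :
  is_pure w = true -> starts_AH (count_A w) (count_H w) (w ++ r) = true.
Proof.
  induction w as [|[] w IH]; intros H; cbn in *; auto;
    apply Nat.eqb_eq in H; rewrite H; cbn; clear IH;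
    induction w as [|[] w IHw]; cbn in *; auto; discriminate.
Qed.

Lemma starts_AH_is_pure a b u : starts_AH a b u = true -> is_pure (firstn (a + b) u) = true.
Proof.
  revert u; induction a as [|a IH]; intros u H.
  - cbn in *. destruct b as [|b]; [reflexivity|]. destruct u as [|l u]; [discriminate|].
    apply andb_true_iff in H as [Hl H]. cbn.
    enough (count_A (firstn b u) = 0) as ->; [now destruct l|].
    clear - H. revert u H; induction b as [|b IHb]; intros [|[] u] H; cbn in *; auto;
      try discriminate; now apply IHb.
  - destruct u as [|[] u]; try discriminate. now apply IH.
Qed.

Section FilterCount.
Variables (A : Type) (f : A -> bool).

Lemma length_filter_false l : (forall x, In x l -> f x = false) -> length (filter f l) = 0.
Proof.
  induction l as [|a l IH]; intros H; cbn; auto.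
  rewrite H by now left. apply IH. intros; apply H; now right.
Qed.

Lemma length_filter_le_1 l : NoDup l ->
  (forall x y, In x l -> In y l -> f x = true -> f y = true -> x = y) ->
  length (filter f l) <= 1.
Proof.
  induction l as [|a l IH]; intros Hnd H; cbn; [lia|].
  inversion Hnd as [|? ? Ha Hl]; subst.
  destruct (f a) eqn:Fa; cbn.
  - rewrite length_filter_false; [lia|]. intros y Hy. destruct (f y) eqn:Fy; auto.
    exfalso. apply Ha. rewrite (H a y); auto; now constructor.
  - apply IH; auto. intros; apply H; cbn; auto.
Qed.

Lemma length_filter_single l x0 : NoDup l -> In x0 l -> f x0 = true ->
  (forall x, In x l -> f x = true -> x = x0) -> length (filter f l) = 1.
Proof.
  intros Hnd Hin Hf H.
  assert (Hle : length (filter f l) <= 1).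
  { apply length_filter_le_1; auto. intros x y Hx Hy Fx Fy. rewrite (H x), (H y); auto. }
  assert (In x0 (filter f l)) by now apply filter_In.
  destruct (filter f l); cbn in *; [contradiction|lia].
Qed.

End FilterCount.

Definition pattern_count (n1 : nat) (u : list letter) : nat :=
  length (filter (fun L => starts_AH L (pred L) u) (seq 2 (n1 - 1))).

Lemma pattern_count_le_1 n1 u : pattern_count n1 u <= 1.
Proof.
  apply length_filter_le_1; [apply seq_NoDup|].
  intros x y Hx%in_seq Hy%in_seq. apply starts_AH_unique; lia.
Qed.

Lemma pattern_count_starts_AH n1 u L : 2 <= L -> starts_AH L (pred L) u = true ->
  pattern_count n1 u = if Nat.leb L n1 then 1 else 0.
Proof.
  intros HL H. unfold pattern_count. destruct (Nat.leb L n1) eqn:E.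
  - apply Nat.leb_le in E. apply length_filter_single with L; auto.
    + apply seq_NoDup.
    + apply in_seq. lia.
    + intros x Hx%in_seq Fx. apply (starts_AH_unique _ _ u); auto; lia.
  - apply Nat.leb_gt in E. apply length_filter_false. intros x Hx%in_seq.
    destruct (starts_AH x (pred x) u) eqn:F; auto.
    assert (x = L) by (apply (starts_AH_unique _ _ u); auto; lia). lia.
Qed.

Lemma pattern_count_0 n1 u :
  (forall L, 2 <= L -> starts_AH L (pred L) u = false) -> pattern_count n1 u = 0.
Proof. intros H. apply length_filter_false. intros x Hx%in_seq. apply H. lia. Qed.

(* A pattern is the whole first cycle, so it is decided once two cycles are complete. *)
Lemma pattern_count_firstn n1 u N : N <= length u -> 2 <= cycles (firstn N u) ->
  pattern_count n1 (firstn N u) = pattern_count n1 u.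
Proof.
  intros HN Hc. unfold pattern_count. f_equal. apply filter_ext_in. intros L HL%in_seq.
  destruct (starts_AH L (pred L) u) eqn:E.
  - destruct (le_lt_dec (2 * L - 1) N) as [Hle|Hlt].
    + apply starts_AH_firstn; [lia|exact E].
    + replace (pred L) with (L - 1) in E by lia.
      destruct (starts_AH_arun L u) as [_ C]; [lia|exact E|].
      pose proof (cycles_firstn_le u N (2 * L - 2)). lia.
  - destruct (starts_AH L (pred L) (firstn N u)) eqn:E2; auto.
    rewrite <- (firstn_skipn N u), starts_AH_app in E by exact E2. discriminate.
Qed.

Lemma pattern_count_H n1 l r : is_H l = true -> pattern_count n1 (l :: r) = 0.
Proof.
  intros Hl. apply pattern_count_0. intros [|L] HL; [lia|]. now destruct l.
Qed.

Lemma pattern_count_AH n1 l l' r : is_H l = true -> pattern_count n1 (LA :: l :: l' :: r) = 0.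
Proof.
  intros Hl. apply pattern_count_0. intros [|[|L]] HL; [lia|lia|]. now destruct l.
Qed.

Lemma pattern_count_impure n1 c l r :
  cycles c = 1 -> cycles (c ++ [l]) = 2 -> is_pure (c ++ [l]) = false ->
  pattern_count n1 (c ++ l :: r) = 0.
Proof.
  intros H1 H2 Hp. apply pattern_count_0. intros L HL.
  destruct (starts_AH L (pred L) (c ++ l :: r)) eqn:E; auto. exfalso.
  replace (pred L) with (L - 1) in E by lia.
  destruct (starts_AH_arun L _ HL E) as [A1 A2].
  set (u := c ++ l :: r) in *.
  assert (Fk : firstn (S (length c)) u = c ++ [l]).
  { unfold u. rewrite firstn_app, firstn_all2 by lia.
    now replace (S (length c) - length c) with 1 by lia. }
  destruct (lt_eq_lt_dec (2 * L - 1) (S (length c))) as [[Lt|Eq]|Gt].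
  - assert (Fc : firstn (2 * L - 1) u = firstn (2 * L - 1) c).
    { unfold u. rewrite firstn_app. replace (2 * L - 1 - length c) with 0 by lia.
      apply app_nil_r. }
    pose proof (cycles_firstn_le c (2 * L - 1) (length c)) as Mono.
    rewrite firstn_all, <- Fc in Mono. unfold cycles at 1 in Mono. rewrite A1 in Mono.
    cbn in Mono. lia.
  - pose proof (starts_AH_is_pure L (L - 1) u E) as P.
    replace (L + (L - 1)) with (S (length c)) in P by lia. congruence.
  - pose proof (cycles_firstn_le u (S (length c)) (2 * L - 2)). rewrite Fk in H. lia.
Qed.

(** * Block trees *)

Lemma memb_In x l : memb x l = true <-> In x l.
Proof.
  unfold memb. rewrite existsb_exists. split.
  - now intros [y [Hy ->%Nat.eqb_eq]].
  - intros H. exists x. split; auto. apply Nat.eqb_refl.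
Qed.

Lemma memb_false_iff x l : memb x l = false <-> ~ In x l.
Proof. rewrite <- memb_In. destruct (memb x l); intuition congruence. Qed.

Inductive ancestor (bs : list block) (x : nat) : nat -> Prop :=
| ancestor_refl : ancestor bs x x
| ancestor_parent i p : parent bs i = Some p -> ancestor bs x p -> ancestor bs x i.

Definition by_attacker (bs : list block) (i : nat) : bool :=
  match get bs i with Some b => b_attacker b | None => false end.

Definition valid_ref n1 bs j u : Prop :=
  exists pj, parent bs j = Some pj /\ u < j /\
    (exists x, parent bs u = Some x /\ ancestor bs x pj) /\ ~ ancestor bs u pj /\
    height bs j - height bs u <= n1 /\ (forall a, ancestor bs a pj -> ~ In u (refs bs a)).

Record well_formed n1 (bs : list block) : Prop := {
  wf_nonempty : 1 <= length bs;
  wf_genesis_parent : parent bs 0 = None;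
  wf_genesis_cycle : cycle_of bs 0 = 0;
  wf_genesis_height : height bs 0 = 0;
  wf_parent : forall i, 0 < i < length bs ->
    exists p, parent bs i = Some p /\ p < i /\ height bs i = S (height bs p);
  wf_refs : forall j u, In u (refs bs j) -> valid_ref n1 bs j u }.

Section WellFormed.
Variables (n1 : nat) (bs : list block).
Hypothesis W : well_formed n1 bs.

Lemma parent_lt i p : parent bs i = Some p -> p < i /\ height bs i = S (height bs p).
Proof.
  intros Hp.
  assert (Hi : i < length bs).
  { unfold parent, get in Hp. destruct (nth_error bs i) eqn:E; [|discriminate].
    apply nth_error_Some. congruence. }
  destruct i as [|i]; [now rewrite (wf_genesis_parent _ _ W) in Hp|].
  destruct (wf_parent _ _ W (S i)) as [p' [E H]]; [lia|]. congruence.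
Qed.

Lemma ancestor_le a i : ancestor bs a i -> a <= i.
Proof. induction 1 as [|i p Hp _ IH]; [lia|]. pose proof (parent_lt i p Hp). lia. Qed.

Lemma ancestor_height a i : ancestor bs a i -> height bs a <= height bs i.
Proof. induction 1 as [|i p Hp _ IH]; [lia|]. pose proof (parent_lt i p Hp). lia. Qed.

Lemma ancestor_genesis i : i < length bs -> ancestor bs 0 i.
Proof.
  induction i as [i IH] using lt_wf_ind. intros Hi. destruct i as [|i]; [constructor|].
  destruct (wf_parent _ _ W (S i)) as [p [E [Lt _]]]; [lia|].
  apply (ancestor_parent _ _ _ p E), IH; lia.
Qed.

Lemma refs_lt j u : In u (refs bs j) -> u < j.
Proof. intros H. now destruct (wf_refs _ _ W j u H) as (? & ? & ? & _). Qed.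

Lemma refs_genesis : refs bs 0 = [].
Proof.
  destruct (refs bs 0) as [|u l] eqn:E; auto.
  assert (H : In u (refs bs 0)) by (rewrite E; now left). apply refs_lt in H. lia.
Qed.

End WellFormed.

Lemma ancestor_trans bs a b c : ancestor bs a b -> ancestor bs b c -> ancestor bs a c.
Proof. intros H1 H2. induction H2; auto. eapply ancestor_parent; eauto. Qed.

Lemma ancestor_inv bs x i :
  ancestor bs x i -> x = i \/ exists p, parent bs i = Some p /\ ancestor bs x p.
Proof. intros H. inversion H; subst; eauto. Qed.

Lemma ancestors_fuel_iff n1 bs f i x : well_formed n1 bs -> i <= f ->
  In x (ancestors_fuel bs f i) <-> ancestor bs x i.
Proof.
  intros W. revert i. induction f as [|f IH]; intros i Hi; cbn.
  - replace i with 0 by lia. split; [intros [<-|[]]; constructor|].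
    intros [->|[p [Hp _]]]%ancestor_inv; auto. now rewrite (wf_genesis_parent _ _ W) in Hp.
  - destruct (parent bs i) as [p|] eqn:Hp.
    + destruct (parent_lt _ _ W i p Hp) as [Lt _].
      rewrite (IH p) by lia. split.
      * intros [<-|H]; [constructor|]. eapply ancestor_parent; eauto.
      * intros [->|[p' [Hp' H]]]%ancestor_inv; auto. right. congruence.
    + split; [intros [<-|[]]; constructor|].
      intros [->|[p' [Hp' _]]]%ancestor_inv; [now left|congruence].
Qed.

Lemma ancestors_iff n1 bs i x : well_formed n1 bs -> i < length bs ->
  In x (ancestors bs i) <-> ancestor bs x i.
Proof. intros W Hi. apply ancestors_fuel_iff with n1; [exact W|lia]. Qed.

Lemma memb_ancestors n1 bs i x : well_formed n1 bs -> i < length bs ->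
  memb x (ancestors bs i) = true <-> ancestor bs x i.
Proof. intros. rewrite memb_In. now apply ancestors_iff with n1. Qed.

Definition same_prefix (n : nat) (bs bs' : list block) : Prop :=
  forall i, i < n -> get bs i = get bs' i.

Section SamePrefix.
Variables (n : nat) (bs bs' : list block).
Hypothesis A : same_prefix n bs bs'.
Variable i : nat.
Hypothesis Hi : i < n.

Lemma same_prefix_parent : parent bs i = parent bs' i.
Proof. unfold parent. now rewrite A. Qed.
Lemma same_prefix_height : height bs i = height bs' i.
Proof. unfold height. now rewrite A. Qed.
Lemma same_prefix_refs : refs bs i = refs bs' i.
Proof. unfold refs. now rewrite A. Qed.
Lemma same_prefix_cycle : cycle_of bs i = cycle_of bs' i.
Proof. unfold cycle_of. now rewrite A. Qed.
Lemma same_prefix_attacker : by_attacker bs i = by_attacker bs' i.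
Proof. unfold by_attacker. now rewrite A. Qed.

End SamePrefix.

Lemma same_prefix_snoc bs b : same_prefix (length bs) bs (bs ++ [b]).
Proof. intros i Hi. unfold get. now rewrite nth_error_app1. Qed.

Lemma get_snoc_length bs b : get (bs ++ [b]) (length bs) = Some b.
Proof. unfold get. rewrite nth_error_app2, Nat.sub_diag; auto. Qed.

Lemma get_ge_length bs i : length bs <= i -> get bs i = None.
Proof. apply nth_error_None. Qed.

Lemma same_prefix_trans n bs1 bs2 bs3 :
  same_prefix n bs1 bs2 -> same_prefix n bs2 bs3 -> same_prefix n bs1 bs3.
Proof. intros A B i Hi. rewrite A, B; auto. Qed.

Lemma same_prefix_le n n' bs bs' : n' <= n -> same_prefix n bs bs' -> same_prefix n' bs bs'.
Proof. intros H A i Hi. apply A. lia. Qed.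

Lemma ancestor_same_prefix n1 n bs bs' x i : well_formed n1 bs -> same_prefix n bs bs' ->
  i < n -> ancestor bs x i <-> ancestor bs' x i.
Proof.
  intros W A Hi. split; intros H.
  - induction H as [|i p Hp _ IH]; [constructor|].
    destruct (parent_lt _ _ W i p Hp).
    apply (ancestor_parent _ _ _ p); [now rewrite <- (same_prefix_parent n bs bs' A)|].
    apply IH. lia.
  - induction H as [|i p Hp _ IH]; [constructor|].
    rewrite <- (same_prefix_parent n bs bs' A) in Hp by exact Hi.
    destruct (parent_lt _ _ W i p Hp). apply (ancestor_parent _ _ _ p Hp), IH. lia.
Qed.

Lemma valid_ref_same_prefix n1 n bs bs' j u : well_formed n1 bs -> same_prefix n bs bs' ->
  j < n -> valid_ref n1 bs j u -> valid_ref n1 bs' j u.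
Proof.
  intros W A Hj (pj & Hp & Hu & (x & Hx & Ax) & NA & Hh & Hr).
  destruct (parent_lt _ _ W j pj Hp) as [Lt _].
  assert (AR : forall y z, z <= pj -> ancestor bs y z <-> ancestor bs' y z)
    by (intros; apply (ancestor_same_prefix n1 n); auto; lia).
  exists pj. repeat split.
  - now rewrite <- (same_prefix_parent n bs bs' A).
  - exact Hu.
  - exists x. rewrite <- (same_prefix_parent n bs bs' A) by lia. now rewrite <- AR.
  - now rewrite <- AR.
  - rewrite <- !(same_prefix_height n bs bs' A) by lia. exact Hh.
  - intros a Ha. rewrite <- AR in Ha by lia. pose proof (ancestor_le _ _ W _ _ Ha).
    rewrite <- (same_prefix_refs n bs bs' A) by lia. auto.
Qed.

Definition eligible_uncle n1 bs (secret : list nat) (attacker : bool) par hb u : Prop :=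
  u < length bs /\ (attacker = true \/ ~ In u secret) /\
  (exists x, parent bs u = Some x /\ ancestor bs x par) /\ ~ ancestor bs u par /\
  hb - height bs u <= n1 /\ (forall a, ancestor bs a par -> ~ In u (refs bs a)).

Lemma In_uncle_refs n1 bs secret attacker par hb u :
  well_formed n1 bs -> par < length bs ->
  In u (uncle_refs n1 bs secret attacker par hb) <->
  eligible_uncle n1 bs secret attacker par hb u.
Proof.
  intros W Hp. unfold uncle_refs, eligible_uncle. rewrite filter_In, in_seq.
  rewrite !andb_true_iff, orb_true_iff, !negb_true_iff, Nat.leb_le, forallb_forall.
  rewrite !memb_false_iff, (ancestors_iff n1 bs par u W Hp).
  assert (AncM : forall y, memb y (ancestors bs par) = true <-> ancestor bs y par)
    by (intros; now apply (memb_ancestors n1)).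
  assert (NoRef : (forall a, In a (ancestors bs par) -> negb (memb u (refs bs a)) = true) <->
                  (forall a, ancestor bs a par -> ~ In u (refs bs a))).
  { setoid_rewrite negb_true_iff. setoid_rewrite memb_false_iff.
    setoid_rewrite (ancestors_iff n1 bs par _ W Hp). reflexivity. }
  rewrite NoRef.
  assert (Par : match parent bs u with Some x => memb x (ancestors bs par) | None => false end
                = true <-> exists x, parent bs u = Some x /\ ancestor bs x par).
  { destruct (parent bs u) as [x|]; split; try discriminate.
    - intros H. exists x. split; [reflexivity|]. now apply AncM.
    - intros [y [[= <-] H]]. now apply AncM.
    - now intros [y [? _]]. }
  rewrite Par. destruct attacker; intuition (try discriminate; lia).
Qed.

Definition new_block n1 bs secret attacker cyc par : block :=
  mkBlock (S (height bs par)) (Some par) attacker cyc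
    (uncle_refs n1 bs secret attacker par (S (height bs par))).

Lemma mine_new_block n1 st par attacker :
  mine n1 st par attacker =
  (st_blocks st ++ [new_block n1 (st_blocks st) (st_secret st) attacker (st_cycle st) par],
   length (st_blocks st)).
Proof. reflexivity. Qed.

Section NewBlock.
Variables (n1 : nat) (bs : list block) (secret : list nat) (attacker : bool) (cyc par : nat).
Let bs' := bs ++ [new_block n1 bs secret attacker cyc par].

Lemma length_new : length bs' = S (length bs).
Proof. unfold bs'. rewrite length_app. cbn. lia. Qed.

Lemma parent_new : parent bs' (length bs) = Some par.
Proof. unfold parent, bs'. now rewrite get_snoc_length. Qed.
Lemma height_new : height bs' (length bs) = S (height bs par).
Proof. unfold height, bs'. now rewrite get_snoc_length. Qed.
Lemma refs_new :
  refs bs' (length bs) = uncle_refs n1 bs secret attacker par (S (height bs par)).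
Proof. unfold refs, bs'. now rewrite get_snoc_length. Qed.
Lemma cycle_new : cycle_of bs' (length bs) = cyc.
Proof. unfold cycle_of, bs'. now rewrite get_snoc_length. Qed.
Lemma attacker_new : by_attacker bs' (length bs) = attacker.
Proof. unfold by_attacker, bs'. now rewrite get_snoc_length. Qed.

Variable i : nat.
Hypothesis Hi : i < length bs.

Lemma parent_old : parent bs' i = parent bs i.
Proof. symmetry. exact (same_prefix_parent _ _ _ (same_prefix_snoc _ _) i Hi). Qed.
Lemma height_old : height bs' i = height bs i.
Proof. symmetry. exact (same_prefix_height _ _ _ (same_prefix_snoc _ _) i Hi). Qed.
Lemma refs_old : refs bs' i = refs bs i.
Proof. symmetry. exact (same_prefix_refs _ _ _ (same_prefix_snoc _ _) i Hi). Qed.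
Lemma cycle_old : cycle_of bs' i = cycle_of bs i.
Proof. symmetry. exact (same_prefix_cycle _ _ _ (same_prefix_snoc _ _) i Hi). Qed.
Lemma attacker_old : by_attacker bs' i = by_attacker bs i.
Proof. symmetry. exact (same_prefix_attacker _ _ _ (same_prefix_snoc _ _) i Hi). Qed.

Hypothesis W : well_formed n1 bs.

Lemma ancestor_old x : ancestor bs' x i <-> ancestor bs x i.
Proof. symmetry. apply (ancestor_same_prefix n1 (length bs)); auto. apply same_prefix_snoc. Qed.

End NewBlock.

Section MineBlock.
Variables (n1 : nat) (bs : list block) (secret : list nat) (attacker : bool) (cyc par : nat).
Hypotheses (W : well_formed n1 bs) (Hpar : par < length bs).
Let bs' := bs ++ [new_block n1 bs secret attacker cyc par].

Lemma ancestor_new x : ancestor bs' x (length bs) <-> x = length bs \/ ancestor bs x par.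
Proof.
  split.
  - intros [->|[p [Ep H]]]%ancestor_inv; auto.
    unfold bs' in Ep. rewrite parent_new in Ep. injection Ep as <-.
    right. exact (proj1 (ancestor_old n1 bs secret attacker cyc par par Hpar W x) H).
  - intros [->|H]; [constructor|]. apply (ancestor_parent _ _ _ par); [apply parent_new|].
    exact (proj2 (ancestor_old n1 bs secret attacker cyc par par Hpar W x) H).
Qed.

Lemma mine_valid_ref u : In u (refs bs' (length bs)) -> valid_ref n1 bs' (length bs) u.
Proof.
  unfold bs'. rewrite refs_new, In_uncle_refs by assumption.
  intros (Hl & _ & (x & Hx & Ax) & NA & Hh & Hr).
  exists par. rewrite parent_new. repeat split; auto.
  - exists x. pose proof (ancestor_le _ _ W _ _ Ax).
    rewrite parent_old, ancestor_old by (auto; lia). auto.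
  - now rewrite ancestor_old.
  - now rewrite height_new, height_old.
  - intros a Ha. rewrite ancestor_old in Ha by auto. pose proof (ancestor_le _ _ W _ _ Ha).
    rewrite refs_old by lia. auto.
Qed.

Lemma mine_well_formed : well_formed n1 bs'.
Proof.
  pose proof (wf_nonempty _ _ W) as L0. unfold bs'.
  constructor; rewrite ?length_new.
  - lia.
  - rewrite parent_old by lia. apply (wf_genesis_parent _ _ W).
  - rewrite cycle_old by lia. apply (wf_genesis_cycle _ _ W).
  - rewrite height_old by lia. apply (wf_genesis_height _ _ W).
  - intros i Hi. destruct (Nat.eq_dec i (length bs)) as [->|Hne].
    + exists par. now rewrite parent_new, height_new, height_old.
    + destruct (wf_parent _ _ W i) as [p [E [Lt Hh]]]; [lia|].
      exists p. now rewrite parent_old, !height_old by lia.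
  - intros j u Hu. destruct (lt_eq_lt_dec j (length bs)) as [[Lt| ->]|Gt].
    + rewrite refs_old in Hu by exact Lt.
      apply (valid_ref_same_prefix n1 (length bs) bs); auto; [apply same_prefix_snoc|].
      now apply (wf_refs _ _ W).
    + now apply mine_valid_ref.
    + unfold refs in Hu. rewrite get_ge_length in Hu; [destruct Hu|].
      rewrite length_app; cbn. lia.
Qed.

End MineBlock.

Definition phase_blocks (ph : phase) : list nat :=
  match ph with
  | Idle => [] | One a => [a] | Tie a h => [a; h] | Fork ach hch => ach ++ hch
  end.

Definition state_ok n1 (s : state) : Prop :=
  well_formed n1 (st_blocks s) /\
  forall x, In x (st_tip s :: st_secret s ++ phase_blocks (st_phase s)) ->
    x < length (st_blocks s).

Lemma lt_add_1_of_new_or_old (L L' : list nat) n :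
  (forall x, In x L' -> n = x \/ In x L) -> (forall x, In x L -> x < n) ->
  forall x, In x L' -> x < n + 1.
Proof. intros H1 H2 x Hx. destruct (H1 x Hx) as [<-|H]; [lia|]. specialize (H2 x H). lia. Qed.

Lemma state_ok_step n1 s l : state_ok n1 s -> state_ok n1 (step n1 s l).
Proof.
  destruct s as [bs sec t c ph]. intros [W B]. cbn [st_blocks st_tip st_secret st_phase] in W, B.
  unfold step. cbn [st_phase st_tip st_cycle st_blocks st_secret].
  destruct ph as [|a|a h|[|a0 ach] [|h0 hch]]; destruct l; rewrite ?mine_new_block;
    cbn [st_phase st_tip st_cycle st_blocks st_secret hd];
    try match goal with |- context [Nat.eqb ?x 1] => destruct (Nat.eqb x 1) end;
    cbn [phase_blocks app] in B; split; cbn [st_blocks st_tip st_secret st_phase].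
  all: try (apply mine_well_formed; [exact W|]; apply B;
            repeat progress (cbn; rewrite ?in_app_iff); tauto).
  all: rewrite length_app; cbn [length]; (eapply lt_add_1_of_new_or_old; [|exact B]); intros y Hy;
    repeat progress (cbn in *; rewrite ?in_app_iff in * ); tauto.
Qed.

Lemma state_ok_fold n1 w s : state_ok n1 s -> state_ok n1 (fold_left (step n1) w s).
Proof.
  revert s; induction w as [|l w IH]; intros s H; cbn; auto. apply IH, state_ok_step, H.
Qed.

Lemma state_ok_run n1 w : state_ok n1 (run n1 w).
Proof.
  apply state_ok_fold. split.
  - constructor; cbn; try reflexivity; [intros; lia|].
    intros j u Hu. unfold refs, get in Hu. destruct j as [|[|j]]; cbn in Hu; destruct Hu.
  - cbn. intros x [<-|[]]. lia.
Qed.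

(** * Uncles of the first cycle referred later *)

(* The blocks [j >= n] of [bs] were mined after a first cycle whose blocks [bs1] agree with
   [bs] below [n] and whose official tip is [t1]: they grow on [t1] or on each other, and each
   of them referred every block below [n] that it was allowed to refer. *)
Record later_extension n1 n t1 (bs1 bs : list block) : Prop := {
  ext_length : n <= length bs;
  ext_prefix : same_prefix n bs1 bs;
  ext_parent : forall j, n <= j < length bs ->
    exists p, parent bs j = Some p /\ (p = t1 \/ n <= p);
  ext_cycle : forall j, n <= j < length bs -> 2 <= cycle_of bs j;
  ext_refs : forall j pj u, n <= j < length bs -> parent bs j = Some pj -> u < n ->
    (exists x, parent bs u = Some x /\ ancestor bs x pj) -> ~ ancestor bs u pj ->
    height bs j - height bs u <= n1 -> (forall a, ancestor bs a pj -> ~ In u (refs bs a)) ->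
    In u (refs bs j) }.

Section ExtendLater.
Variables (n1 n t1 : nat) (bs1 bs : list block) (secret : list nat) (attacker : bool).
Variables (cyc par : nat).
Hypotheses (W : well_formed n1 bs) (E : later_extension n1 n t1 bs1 bs).
Hypotheses (Hpar : par < length bs) (Hsecret : forall x, In x secret -> n <= x).
Let bs' := bs ++ [new_block n1 bs secret attacker cyc par].

(* Blocks below [n] are public, so the new block refers all of them it may refer. *)
Lemma new_block_refs_old_uncles u : u < n ->
  (exists x, parent bs' u = Some x /\ ancestor bs' x par) -> ~ ancestor bs' u par ->
  S (height bs par) - height bs' u <= n1 ->
  (forall a, ancestor bs' a par -> ~ In u (refs bs' a)) -> In u (refs bs' (length bs)).
Proof.
  pose proof (ext_length _ _ _ _ _ E) as Hn.
  intros Hu [x [Ex Ax]] NA Hh Hr. unfold bs'. rewrite refs_new, In_uncle_refs by assumption.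
  unfold bs' in *. rewrite parent_old, ancestor_old in * by (auto; lia).
  rewrite height_old in Hh by lia.
  repeat split; auto; [lia| |eauto|].
  - right. intros Hin. specialize (Hsecret u Hin). lia.
  - intros a Ha. pose proof (ancestor_le _ _ W _ _ Ha).
    rewrite <- (refs_old n1 bs secret attacker cyc par) by lia.
    apply Hr. now rewrite ancestor_old.
Qed.

Lemma later_extension_mine : (par = t1 \/ n <= par) -> 2 <= cyc ->
  later_extension n1 n t1 bs1 bs'.
Proof.
  intros Hpp Hcyc. destruct E as [Hn Ag Hp Hc Hr].
  assert (Old : forall i, i < length bs -> forall x,
    ancestor bs' x i <-> ancestor bs x i) by (intros; now apply ancestor_old).
  unfold bs' in *.
  constructor; rewrite ?length_new.
  - lia.
  - apply same_prefix_trans with bs; [exact Ag|].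
    apply same_prefix_le with (length bs); [exact Hn|apply same_prefix_snoc].
  - intros j Hj. destruct (Nat.eq_dec j (length bs)) as [->|Hne].
    + exists par. now rewrite parent_new.
    + rewrite parent_old by lia. apply Hp. lia.
  - intros j Hj. destruct (Nat.eq_dec j (length bs)) as [->|Hne].
    + now rewrite cycle_new.
    + rewrite cycle_old by lia. apply Hc. lia.
  - intros j pj u Hj Hpj Hu Hx NA Hh Hnr.
    destruct (Nat.eq_dec j (length bs)) as [->|Hne].
    + rewrite parent_new in Hpj. injection Hpj as <-. rewrite height_new in Hh.
      now apply new_block_refs_old_uncles.
    + rewrite parent_old in Hpj by lia. destruct (parent_lt _ _ W j pj Hpj) as [Lt _].
      rewrite refs_old by lia. apply (Hr j pj u); auto; [lia| | | |].
      * destruct Hx as [x [Ex Ax]]. exists x.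
        rewrite parent_old in Ex by lia. rewrite Old in Ax by lia. auto.
      * now rewrite <- Old by lia.
      * rewrite !height_old in Hh by lia. exact Hh.
      * intros a Ha. pose proof (ancestor_le _ _ W _ _ Ha).
        rewrite <- (refs_old n1 bs secret attacker cyc par) by lia.
        apply Hnr. now rewrite Old by lia.
Qed.

End ExtendLater.

Record later_inv n1 n t1 bs1 (s : state) : Prop := {
  li_ok : state_ok n1 s;
  li_ext : later_extension n1 n t1 bs1 (st_blocks s);
  li_tip : st_tip s = t1 \/ n <= st_tip s;
  li_new : forall x, In x (st_secret s ++ phase_blocks (st_phase s)) -> n <= x;
  li_cycle : 2 <= st_cycle s;
  li_tip_moved : 3 <= st_cycle s -> n <= st_tip s }.

Lemma le_of_new_or_old (L L' : list nat) n N :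
  (forall x, In x L' -> N = x \/ In x L) -> (forall x, In x L -> n <= x) -> n <= N ->
  forall x, In x L' -> n <= x.
Proof. intros H1 H2 H3 x Hx. now destruct (H1 x Hx) as [<-|H]; auto. Qed.

(* Routine case analysis on [step]: every new block is mined on a block recorded in the
   state, and these are all [t1] or later blocks. *)
Lemma later_inv_step n1 n t1 bs1 s l :
  later_inv n1 n t1 bs1 s -> later_inv n1 n t1 bs1 (step n1 s l).
Proof.
  intros [G Ext Ht Hm Hc2 Hc3].
  pose proof (state_ok_step n1 s l G) as G'.
  destruct G as [W B]. destruct s as [bs sec t c ph].
  cbn [st_blocks st_tip st_secret st_phase st_cycle] in *.
  pose proof (ext_length _ _ _ _ _ Ext) as Hn.
  unfold step in *. cbn [st_phase st_tip st_cycle st_blocks st_secret] in *.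
  destruct ph as [|a|a h|[|a0 ach] [|h0 hch]]; destruct l; rewrite ?mine_new_block in *;
    cbn [st_phase st_tip st_cycle st_blocks st_secret hd] in *;
    try match goal with |- context [Nat.eqb ?x 1] => destruct (Nat.eqb x 1) eqn:Eq end;
    try (cbn in Eq; discriminate);
    cbn [phase_blocks app] in B, Hm;
    constructor; cbn [st_phase st_tip st_cycle st_blocks st_secret]; try exact G'.
  all: try (apply later_extension_mine; [exact W|exact Ext| | | |exact Hc2];
    [ apply B; repeat progress (cbn; rewrite ?in_app_iff); tauto
    | intros y Hy; apply Hm; repeat progress (cbn; rewrite ?in_app_iff); tauto
    | first [ exact Ht | right; apply Hm; repeat progress (cbn; rewrite ?in_app_iff); tauto ] ]).
  all: try solve [ exact Ht | right; exact Hn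
                 | right; apply Hm; repeat progress (cbn; rewrite ?in_app_iff); tauto ].
  all: try ((eapply le_of_new_or_old; [|exact Hm|exact Hn]); intros y Hy;
    repeat progress (cbn in *; rewrite ?in_app_iff in * ); tauto).
  all: try lia.
  all: intros H3; first [ exact Hn | apply Hc3; lia
                        | apply Hm; repeat progress (cbn; rewrite ?in_app_iff); tauto ].
Qed.

Lemma later_inv_fold n1 n t1 bs1 w s :
  later_inv n1 n t1 bs1 s -> later_inv n1 n t1 bs1 (fold_left (step n1) w s).
Proof.
  revert s; induction w as [|l w IH]; intros s H; cbn; auto. apply IH, later_inv_step, H.
Qed.

Lemma later_inv_init n1 S1 : state_ok n1 S1 -> st_phase S1 = Idle -> st_secret S1 = [] ->
  st_cycle S1 = 2 -> later_inv n1 (length (st_blocks S1)) (st_tip S1) (st_blocks S1) S1.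
Proof.
  intros G Hph Hsec Hc. constructor; auto.
  - constructor; [lia|intros ? ?; reflexivity|intros; lia..].
  - rewrite Hsec, Hph. intros x [].
  - lia.
  - lia.
Qed.

Lemma later_ancestors n1 n t1 bs1 bs :
  well_formed n1 bs -> later_extension n1 n t1 bs1 bs -> t1 < n ->
  forall j, n <= j < length bs ->
  (forall x, x < n -> ancestor bs x j <-> ancestor bs x t1) /\
  exists j0, ancestor bs j0 j /\ n <= j0 /\ parent bs j0 = Some t1.
Proof.
  intros W E Ht1 j. induction j as [j IH] using lt_wf_ind. intros Hj.
  destruct (ext_parent _ _ _ _ _ E j Hj) as [p [Ep Hp]].
  destruct (parent_lt _ _ W _ _ Ep) as [Lt _].
  assert (Step : forall x, x < n -> ancestor bs x j <-> ancestor bs x p).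
  { intros x Hx. split.
    - intros [->|[p' [Ep' H]]]%ancestor_inv; [lia|congruence].
    - intros H. eapply ancestor_parent; eauto. }
  destruct Hp as [->|Hp].
  - split; [exact Step|]. exists j. split; [constructor|]. split; [lia|exact Ep].
  - destruct (IH p Lt) as [IH1 [j0 [A0 [N0 P0]]]]; [lia|]. split.
    + intros x Hx. rewrite Step, IH1 by exact Hx. reflexivity.
    + exists j0. split; [|auto]. eapply ancestor_trans; [exact A0|].
      eapply ancestor_parent; [exact Ep|constructor].
Qed.

Definition referable n1 (bs : list block) (t i : nat) : bool :=
  negb (memb i (ancestors bs t)) &&
  match parent bs i with Some x => memb x (ancestors bs t) | None => false end &&
  forallb (fun a => negb (memb i (refs bs a))) (ancestors bs t) &&
  Nat.leb (S (height bs t) - height bs i) n1.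

Definition count_referable n1 (s : state) : nat :=
  length (filter (referable n1 (st_blocks s) (st_tip s)) (seq 0 (length (st_blocks s)))).

Definition V_state (fin : state) : nat :=
  let bs := st_blocks fin in
  let ids := seq 0 (length bs) in
  length (filter (fun i =>
    is_uncle fin i && Nat.eqb (cycle_of bs i) 1 &&
    existsb (fun j => official fin j && Nat.leb 2 (cycle_of bs j)
                      && memb i (refs bs j)) ids) ids).

Lemma V_V_state n1 u : V n1 u = V_state (run n1 u).
Proof. reflexivity. Qed.

Section LaterReferences.
Variables (n1 t1 : nat) (bs1 : list block) (F : state).
Local Notation n := (length bs1).
Local Notation bsF := (st_blocks F).
Local Notation tF := (st_tip F).
Hypotheses (W1 : well_formed n1 bs1) (Ht1 : t1 < n).
Hypotheses (I : later_inv n1 n t1 bs1 F) (Hc3 : 3 <= st_cycle F).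

Let WF : well_formed n1 bsF := proj1 (li_ok _ _ _ _ _ I).
Let E : later_extension n1 n t1 bs1 bsF := li_ext _ _ _ _ _ I.
Let HtF : n <= tF := li_tip_moved _ _ _ _ _ I Hc3.
Let HtF' : tF < length bsF := proj2 (li_ok _ _ _ _ _ I) tF (or_introl eq_refl).

Lemma ancestor_final_old x i : i < n -> ancestor bs1 x i <-> ancestor bsF x i.
Proof. intros Hi. apply (ancestor_same_prefix n1 n); auto. apply (ext_prefix _ _ _ _ _ E). Qed.

Lemma official_final_old x : x < n -> official F x = memb x (ancestors bs1 t1).
Proof.
  intros Hx. unfold official. apply eq_true_iff_eq.
  rewrite (memb_ancestors n1 bsF tF x WF HtF'), (memb_ancestors n1 bs1 t1 x W1 Ht1).
  destruct (later_ancestors _ _ _ _ _ WF E Ht1 tF) as [C _]; [lia|].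
  rewrite C by exact Hx. now rewrite ancestor_final_old.
Qed.

Lemma referred_later_necessary i j : i < n -> n <= j < length bsF -> In i (refs bsF j) ->
  (forall a, ancestor bs1 a t1 -> ~ In i (refs bs1 a)) /\ S (height bs1 t1) - height bs1 i <= n1.
Proof.
  intros Hi Hj Hr.
  destruct (wf_refs _ _ WF j i Hr) as (pj & Epj & _ & _ & _ & Hh & Hnr).
  destruct (ext_parent _ _ _ _ _ E j Hj) as [p [Ep Hp]]. rewrite Epj in Ep. injection Ep as <-.
  assert (Atp : ancestor bsF t1 pj).
  { destruct Hp as [->|Hp]; [constructor|].
    destruct (parent_lt _ _ WF _ _ Epj).
    destruct (later_ancestors _ _ _ _ _ WF E Ht1 pj) as [C _]; [lia|]. apply C; [lia|constructor]. }
  split.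
  - intros a Ha. pose proof (ancestor_le _ _ W1 _ _ Ha).
    rewrite (same_prefix_refs n bs1 bsF (ext_prefix _ _ _ _ _ E)) by lia.
    apply Hnr. eapply ancestor_trans; [|exact Atp]. now apply ancestor_final_old.
  - destruct (parent_lt _ _ WF _ _ Epj) as [_ Hhj].
    pose proof (ancestor_height _ _ WF _ _ Atp).
    rewrite !(same_prefix_height n bs1 bsF (ext_prefix _ _ _ _ _ E)) by lia. lia.
Qed.

Lemma referred_later_sufficient i x : i < n -> parent bs1 i = Some x -> ancestor bs1 x t1 ->
  ~ ancestor bs1 i t1 -> (forall a, ancestor bs1 a t1 -> ~ In i (refs bs1 a)) ->
  S (height bs1 t1) - height bs1 i <= n1 ->
  exists j, n <= j < length bsF /\ official F j = true /\ In i (refs bsF j).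
Proof.
  intros Hi Ex Ax NA Hnr Hh.
  pose proof (ext_prefix _ _ _ _ _ E) as P.
  destruct (later_ancestors _ _ _ _ _ WF E Ht1 tF) as [_ [j0 [A0 [N0 P0]]]]; [lia|].
  pose proof (ancestor_le _ _ WF _ _ A0).
  exists j0. split; [lia|]. split.
  - unfold official. now apply (memb_ancestors n1).
  - destruct (parent_lt _ _ W1 _ _ Ex) as [Lx _].
    apply (ext_refs _ _ _ _ _ E j0 t1 i); auto; [lia| | | |].
    + exists x. rewrite <- (same_prefix_parent n bs1 bsF P) by exact Hi.
      split; [exact Ex|]. apply ancestor_final_old; [exact Ht1|exact Ax].
    + now rewrite <- ancestor_final_old.
    + destruct (parent_lt _ _ WF _ _ P0) as [_ ->].
      now rewrite <- !(same_prefix_height n bs1 bsF P) by lia.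
    + intros a Ha. pose proof (ancestor_le _ _ WF _ _ Ha).
      rewrite <- ancestor_final_old in Ha by exact Ht1.
      rewrite <- (same_prefix_refs n bs1 bsF P) by lia. auto.
Qed.

Hypothesis Hcyc : forall i, 0 < i < n -> cycle_of bs1 i = 1.

Lemma cycle_final_old j : j < n -> cycle_of bsF j <= 1.
Proof.
  intros Hj. rewrite <- (same_prefix_cycle n bs1 bsF (ext_prefix _ _ _ _ _ E)) by exact Hj.
  destruct j as [|j]; [rewrite (wf_genesis_cycle _ _ W1); lia|]. rewrite Hcyc; lia.
Qed.

Lemma referred_later_referable i : i < n ->
  is_uncle F i && Nat.eqb (cycle_of bsF i) 1 &&
  existsb (fun j => official F j && Nat.leb 2 (cycle_of bsF j) && memb i (refs bsF j))
    (seq 0 (length bsF)) = referable n1 bs1 t1 i.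
Proof.
  intros Hi. pose proof (ext_prefix _ _ _ _ _ E) as P.
  unfold is_uncle, referable. rewrite official_final_old by exact Hi.
  rewrite <- (same_prefix_parent n bs1 bsF P) by exact Hi.
  destruct i as [|i].
  - rewrite (wf_genesis_parent _ _ W1). now rewrite !andb_false_r.
  - rewrite <- (same_prefix_cycle n bs1 bsF P), Hcyc by lia. rewrite andb_true_r.
    destruct (parent bs1 (S i)) as [x|] eqn:Ex; [|now rewrite !andb_false_r].
    destruct (parent_lt _ _ W1 _ _ Ex) as [Lx _].
    rewrite official_final_old by lia.
    destruct (memb (S i) (ancestors bs1 t1)) eqn:Mi; [reflexivity|].
    destruct (memb x (ancestors bs1 t1)) eqn:Mx; [|reflexivity].
    apply memb_false_iff in Mi. rewrite (ancestors_iff n1 bs1 t1 _ W1 Ht1) in Mi.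
    apply (memb_ancestors n1 bs1 t1 x W1 Ht1) in Mx.
    cbn [negb andb]. apply eq_true_iff_eq.
    rewrite andb_true_iff, existsb_exists, forallb_forall, Nat.leb_le.
    setoid_rewrite (ancestors_iff n1 bs1 t1 _ W1 Ht1).
    setoid_rewrite negb_true_iff. setoid_rewrite memb_false_iff.
    split.
    + intros [j [Hj%in_seq Hc]]. rewrite !andb_true_iff, Nat.leb_le, memb_In in Hc.
      destruct Hc as [[_ Hcj] Hr].
      destruct (le_lt_dec n j) as [Hn|Hn]; [|pose proof (cycle_final_old j Hn); lia].
      apply (referred_later_necessary (S i) j); auto; lia.
    + intros [Hnr Hh]. destruct (referred_later_sufficient (S i) x) as (j & Hj & Hoff & Hr); auto.
      exists j. split; [apply in_seq; lia|].
      apply memb_In in Hr. rewrite Hoff, Hr, andb_true_r. apply Nat.leb_le.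
      now apply (ext_cycle _ _ _ _ _ E).
Qed.

End LaterReferences.

Lemma length_filter_seq_prefix (f : nat -> bool) n L : n <= L ->
  (forall x, n <= x < L -> f x = false) ->
  length (filter f (seq 0 L)) = length (filter f (seq 0 n)).
Proof.
  intros HnL Hf. replace L with (n + (L - n)) by lia.
  rewrite seq_app, filter_app, length_app, (length_filter_false _ _ (seq n _)); [lia|].
  intros x Hx%in_seq. apply Hf. lia.
Qed.

Record after_first_cycle (s : state) : Prop := {
  afc_idle : st_phase s = Idle;
  afc_secret : st_secret s = [];
  afc_cycle : st_cycle s = 2;
  afc_blocks : forall i, 0 < i < length (st_blocks s) -> cycle_of (st_blocks s) i = 1 }.

(* After the first cycle, the cycle-1 uncles referred later are exactly those still
   referable from the tip: the first later block on top of that tip refers all of them. *)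
Theorem V_state_later n1 S1 r : state_ok n1 S1 -> after_first_cycle S1 ->
  3 <= st_cycle (fold_left (step n1) r S1) ->
  V_state (fold_left (step n1) r S1) = count_referable n1 S1.
Proof.
  intros G [Hph Hsec Hc Hcyc] Hc3.
  pose proof (later_inv_fold _ _ _ _ r _ (later_inv_init n1 S1 G Hph Hsec Hc)) as I.
  set (F := fold_left (step n1) r S1) in *.
  destruct G as [W1 B1]. assert (Ht1 : st_tip S1 < length (st_blocks S1)) by (apply B1; now left).
  pose proof (li_ext _ _ _ _ _ I) as E.
  unfold V_state, count_referable. cbv zeta.
  rewrite (length_filter_seq_prefix _ (length (st_blocks S1)));
    [|apply (ext_length _ _ _ _ _ E)|].
  - f_equal. apply filter_ext_in. intros i Hi%in_seq.
    apply referred_later_referable; auto. lia.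
  - intros x Hx.
    destruct (Nat.eqb (cycle_of (st_blocks F) x) 1) eqn:Ec; [|now rewrite andb_false_r].
    apply Nat.eqb_eq in Ec. pose proof (ext_cycle _ _ _ _ _ E x Hx). lia.
Qed.

(** * The first cycle *)

Definition attackers_first (bs : list block) : Prop :=
  forall i j, 0 < i < length bs -> 0 < j < length bs ->
    by_attacker bs i = true -> by_attacker bs j = false -> i < j.

Definition honest_root_referred (bs : list block) : Prop :=
  exists h1 x, 0 < h1 < length bs /\ by_attacker bs h1 = false /\ parent bs h1 = Some 0 /\
    0 < x < length bs /\ by_attacker bs x = true /\ In h1 (refs bs x).

(* The first cycle in its fork phase: the attacker chain [ach] and the honest chain
   [hch] both grow from the genesis block; [h1] below is the first honest block. *)
Record fork_inv n1 (c : list letter) (bs : list block) (ach hch : list nat) : Prop := {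
  fi_wf : well_formed n1 bs;
  fi_cycle : forall i, 0 < i < length bs -> cycle_of bs i = 1;
  fi_ach : ach <> [];
  fi_tip : 0 < hd 0 ach < length bs;
  fi_tip_attacker : by_attacker bs (hd 0 ach) = true;
  fi_tip_ancestors : forall x, ancestor bs x (hd 0 ach) -> x = 0 \/ by_attacker bs x = true;
  fi_attacker_ancestors : forall i, 0 < i < length bs -> by_attacker bs i = true ->
    ancestor bs i (hd 0 ach);
  fi_honest_parent : forall i, 0 < i < length bs -> by_attacker bs i = false ->
    parent bs i = Some 0 \/ exists p, parent bs i = Some p /\ 0 < p /\ by_attacker bs p = false;
  fi_honest_root_unique : forall i j, 0 < i < length bs -> 0 < j < length bs ->
    by_attacker bs i = false -> by_attacker bs j = false ->
    parent bs i = Some 0 -> parent bs j = Some 0 -> i = j;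
  fi_tip_height : height bs (hd 0 ach) = length ach;
  fi_no_honest : hch = [] -> forall i, 0 < i < length bs -> by_attacker bs i = true;
  fi_honest_tip : forall h, hd_error hch = Some h -> 0 < h < length bs /\ by_attacker bs h = false;
  fi_count_A : length ach = count_A c;
  fi_count_H : length hch = count_H c;
  fi_pure : is_pure c = true <-> attackers_first bs;
  fi_impure : ~ attackers_first bs -> honest_root_referred bs \/ n1 < length ach;
  fi_honest_root : hch <> [] -> exists h1, 0 < h1 < length bs /\ by_attacker bs h1 = false /\
    parent bs h1 = Some 0 }.

Section ForkAttack.
Variables (n1 : nat) (c : list letter) (bs : list block) (ach hch : list nat) (sec : list nat).
Hypothesis FI : fork_inv n1 c bs ach hch.
Local Notation a := (hd 0 ach).
Local Notation bs' := (bs ++ [new_block n1 bs sec true 1 a]).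

Lemma honest_root_referred_old : honest_root_referred bs -> honest_root_referred bs'.
Proof.
  intros (h1 & x & Hh1 & Ah1 & Ph1 & Hx & Ax & Rx). exists h1, x.
  rewrite length_new, !attacker_old, parent_old, refs_old by lia. repeat split; auto; lia.
Qed.

(* An attacker block mined after [h1] refers it, unless the fork is already too long. *)
Lemma fork_attack_impure :
  ~ attackers_first bs' -> honest_root_referred bs' \/ n1 < S (length ach).
Proof.
  destruct FI as [W _ _ Ha _ Anc _ _ _ Hh Noh _ _ _ _ Imp Root].
  intros NF. destruct (classic (attackers_first bs)) as [F|NF0].
  2: { destruct (Imp NF0) as [R|R]; [left; now apply honest_root_referred_old|right; lia]. }
  assert (Hne : hch <> []).
  { intros E. apply NF. intros i j Hi Hj Ai Aj. rewrite length_new in Hi, Hj.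
    destruct (Nat.eq_dec j (length bs)) as [->|Hne]; [now rewrite attacker_new in Aj|].
    rewrite attacker_old, (Noh E j) in Aj by lia. discriminate. }
  destruct (Root Hne) as (h1 & Hh1 & Ah1 & Ph1).
  destruct (le_lt_dec (length ach) n1) as [Le|Gt]; [|right; lia].
  left. exists h1, (length bs). rewrite length_new, attacker_old, parent_old, attacker_new by lia.
  repeat split; auto; try lia.
  rewrite refs_new, In_uncle_refs by (auto; lia).
  split; [lia|]. split; [now left|]. split.
  { exists 0. split; [exact Ph1|]. apply (ancestor_genesis n1); auto; lia. }
  split; [intros HA; destruct (Anc h1 HA); [lia|congruence]|].
  split.
  { destruct (parent_lt _ _ W _ _ Ph1) as [_ ->]. rewrite Hh, (wf_genesis_height _ _ W). lia. }
  intros b Hb HIn. destruct (Anc b Hb) as [->|Ab].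
  - now rewrite (refs_genesis _ _ W) in HIn.
  - pose proof (refs_lt _ _ W _ _ HIn). pose proof (ancestor_le _ _ W _ _ Hb).
    assert (b < h1) by (apply F; auto; lia). lia.
Qed.

Lemma fork_attack_pure : is_pure (c ++ [LA]) = true <-> attackers_first bs'.
Proof.
  destruct FI as [_ _ _ _ _ _ _ _ _ _ Noh Hht _ NH Pure _ _].
  rewrite is_pure_snoc_A, andb_true_iff, Pure, Nat.eqb_eq, <- NH. split.
  - intros [P E] i j Hi Hj Ai Aj. rewrite length_new in Hi, Hj.
    destruct (Nat.eq_dec j (length bs)) as [->|Hne]; [now rewrite attacker_new in Aj|].
    apply length_zero_iff_nil in E. rewrite attacker_old, (Noh E j) in Aj by lia. discriminate.
  - intros P. split.
    + intros i j Hi Hj Ai Aj. apply P; rewrite ?length_new, ?attacker_old; auto; lia.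
    + destruct hch as [|h hch']; [reflexivity|]. exfalso.
      destruct (Hht h eq_refl) as [Hh1 Hh2].
      enough (length bs < h) by lia.
      apply P; rewrite ?length_new, ?attacker_new, ?attacker_old; auto; lia.
Qed.

Lemma fork_inv_attack : fork_inv n1 (c ++ [LA]) bs' (length bs :: ach) hch.
Proof.
  pose proof fork_attack_pure as Pure'. pose proof fork_attack_impure as Imp'.
  destruct FI as [W Cy _ Ha Haa Anc AttAnc Hpar Uniq Hh Noh Hhh NA NH _ _ Root].
  assert (L0 := wf_nonempty _ _ W).
  assert (AnN : forall x, ancestor bs' x (length bs) <-> x = length bs \/ ancestor bs x a)
    by (intros; apply ancestor_new; auto; lia).
  constructor; cbn [hd length]; rewrite ?length_new.
  - apply mine_well_formed; auto; lia.
  - intros i Hi. destruct (Nat.eq_dec i (length bs)) as [->|Hne]; [apply cycle_new|].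
    rewrite cycle_old by lia. apply Cy. lia.
  - discriminate.
  - lia.
  - apply attacker_new.
  - intros x [->|Hx]%AnN; [right; apply attacker_new|].
    pose proof (ancestor_le _ _ W _ _ Hx). rewrite attacker_old by lia. auto.
  - intros i Hi Hatt. apply AnN. destruct (Nat.eq_dec i (length bs)) as [->|Hne]; [now left|].
    rewrite attacker_old in Hatt by lia. right. apply AttAnc; auto; lia.
  - intros i Hi Hatt. destruct (Nat.eq_dec i (length bs)) as [->|Hne].
    + now rewrite attacker_new in Hatt.
    + rewrite attacker_old in Hatt by lia. rewrite parent_old by lia.
      destruct (Hpar i) as [E|[p [E [Hp Hpa]]]]; auto; [lia|].
      destruct (parent_lt _ _ W _ _ E). right. exists p. rewrite attacker_old by lia. auto.
  - intros i j Hi Hj Ai Aj Pi Pj.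
    destruct (Nat.eq_dec i (length bs)) as [->|Hne]; [now rewrite attacker_new in Ai|].
    destruct (Nat.eq_dec j (length bs)) as [->|Hne']; [now rewrite attacker_new in Aj|].
    rewrite attacker_old in Ai, Aj by lia. rewrite parent_old in Pi, Pj by lia.
    apply Uniq; auto; lia.
  - now rewrite height_new, Hh.
  - intros E i Hi. destruct (Nat.eq_dec i (length bs)) as [->|Hne]; [apply attacker_new|].
    rewrite attacker_old by lia. apply Noh; auto; lia.
  - intros h E. destruct (Hhh h E). rewrite attacker_old by lia. split; [lia|auto].
  - rewrite count_A_app, NA. cbn. lia.
  - rewrite count_H_app, NH. cbn. lia.
  - exact Pure'.
  - exact Imp'.
  - intros E. destruct (Root E) as (h1 & Hh1 & Ah1 & Ph1). exists h1.
    rewrite attacker_old, parent_old by lia. repeat split; auto; lia.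
Qed.

End ForkAttack.

Lemma attackers_first_honest_new n1 bs sec cyc par :
  attackers_first (bs ++ [new_block n1 bs sec false cyc par]) <-> attackers_first bs.
Proof.
  split; intros F i j Hi Hj Ai Aj.
  - apply F; rewrite ?length_new, ?attacker_old; auto; lia.
  - rewrite length_new in Hi, Hj.
    destruct (Nat.eq_dec i (length bs)) as [->|Hne]; [now rewrite attacker_new in Ai|].
    destruct (Nat.eq_dec j (length bs)) as [->|Hne']; [lia|].
    rewrite attacker_old in Ai, Aj by lia. apply F; auto; lia.
Qed.

Section ForkHonest.
Variables (n1 : nat) (c : list letter) (bs : list block) (ach hch : list nat) (sec : list nat).
Variable l : letter.
Hypotheses (Hl : is_H l = true) (FI : fork_inv n1 c bs ach hch).
Local Notation h := (hd 0 hch).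
Local Notation bs' := (bs ++ [new_block n1 bs sec false 1 h]).

Lemma honest_tip_cases :
  h < length bs /\ (hch = [] -> h = 0) /\ (hch <> [] -> 0 < h /\ by_attacker bs h = false).
Proof.
  pose proof (wf_nonempty _ _ (fi_wf _ _ _ _ _ FI)).
  destruct hch as [|h0 hch'] eqn:E; cbn.
  - split; [lia|split; [auto|now intros []]].
  - destruct (fi_honest_tip _ _ _ _ _ FI h0) as [H1 H2]; [reflexivity|].
    repeat split; auto; [lia|discriminate|lia].
Qed.

Lemma fork_inv_honest_parent i : 0 < i < length bs' -> by_attacker bs' i = false ->
  parent bs' i = Some 0 \/ exists p, parent bs' i = Some p /\ 0 < p /\ by_attacker bs' p = false.
Proof.
  destruct FI as [W _ _ _ _ _ _ Hpar _ _ _ _ _ _ _ _ _].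
  destruct honest_tip_cases as [Hq [Hq0 Hq1]].
  intros Hi Hatt. rewrite length_new in Hi. destruct (Nat.eq_dec i (length bs)) as [->|Hne].
  - rewrite parent_new. destruct hch as [|h0 hch']; [left; now rewrite Hq0|].
    right. exists h0. destruct Hq1 as [Hq2 Hq3]; [discriminate|]. cbn in Hq, Hq2, Hq3.
    rewrite attacker_old by exact Hq. auto.
  - rewrite attacker_old in Hatt by lia. rewrite parent_old by lia.
    destruct (Hpar i) as [E|[p [E [Hp Hpa]]]]; auto; [lia|].
    destruct (parent_lt _ _ W _ _ E). right. exists p. rewrite attacker_old by lia. auto.
Qed.

Lemma fork_inv_honest_root_unique i j : 0 < i < length bs' -> 0 < j < length bs' ->
  by_attacker bs' i = false -> by_attacker bs' j = false ->
  parent bs' i = Some 0 -> parent bs' j = Some 0 -> i = j.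
Proof.
  destruct FI as [_ _ _ _ _ _ _ _ Uniq _ Noh _ _ _ _ _ _].
  destruct honest_tip_cases as [Hq [_ Hq1]].
  assert (New : forall k, 0 < k < length bs -> by_attacker bs k = false ->
                parent bs' (length bs) = Some 0 -> False).
  { intros k Hk Ak P. rewrite parent_new in P. injection P as P.
    destruct hch as [|h0 hch']; [rewrite (Noh eq_refl k Hk) in Ak; discriminate|].
    destruct Hq1 as [Hq2 _]; [discriminate|]. cbn in P, Hq2. lia. }
  intros Hi Hj Ai Aj Pi Pj. rewrite length_new in Hi, Hj.
  destruct (Nat.eq_dec i (length bs)) as [->|Hne];
    destruct (Nat.eq_dec j (length bs)) as [->|Hne']; auto.
  - rewrite attacker_old in Aj by lia. exfalso. apply (New j); auto. lia.
  - rewrite attacker_old in Ai by lia. exfalso. apply (New i); auto. lia.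
  - rewrite attacker_old in Ai, Aj by lia. rewrite parent_old in Pi, Pj by lia.
    apply Uniq; auto; lia.
Qed.

Lemma fork_inv_honest : fork_inv n1 (c ++ [l]) bs' ach (length bs :: hch).
Proof.
  pose proof fork_inv_honest_parent as Hpar'. pose proof fork_inv_honest_root_unique as Uniq'.
  destruct FI as [W Cy Ne Ha Haa Anc AttAnc _ _ Hh _ Hhh NA NH Pure Imp Root].
  destruct honest_tip_cases as [Hq [Hq0 _]].
  assert (AnO : forall x i, i < length bs -> ancestor bs' x i <-> ancestor bs x i)
    by (intros; now apply ancestor_old).
  constructor; cbn [hd length hd_error]; rewrite ?length_new.
  - now apply mine_well_formed.
  - intros i Hi. destruct (Nat.eq_dec i (length bs)) as [->|Hne]; [apply cycle_new|].
    rewrite cycle_old by lia. apply Cy. lia.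
  - exact Ne.
  - lia.
  - now rewrite attacker_old by lia.
  - intros x Hx. apply AnO in Hx; [|lia]. pose proof (ancestor_le _ _ W _ _ Hx).
    rewrite attacker_old by lia. auto.
  - intros i Hi Hatt. destruct (Nat.eq_dec i (length bs)) as [->|Hne].
    + now rewrite attacker_new in Hatt.
    + rewrite attacker_old in Hatt by lia. apply AnO; [lia|]. apply AttAnc; auto; lia.
  - intros i Hi Ai. apply Hpar'; [rewrite length_new; lia|exact Ai].
  - intros i j Hi Hj Ai Aj Pi Pj. apply Uniq'; rewrite ?length_new; assumption.
  - now rewrite height_old by lia.
  - discriminate.
  - intros h0 [= <-]. split; [lia|apply attacker_new].
  - rewrite count_A_app, NA. destruct l; try discriminate; cbn; lia.
  - rewrite count_H_app, NH. destruct l; try discriminate; cbn; lia.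
  - now rewrite is_pure_snoc_H, Pure, attackers_first_honest_new.
  - rewrite attackers_first_honest_new. intros NF.
    destruct (Imp NF) as [(h1 & x & Hh1 & Ah1 & Ph1 & Hx & Ax & Rx)|Gt]; [left|now right].
    exists h1, x. rewrite length_new, !attacker_old, parent_old, refs_old by lia.
    repeat split; auto; lia.
  - intros _. destruct hch as [|h0 hch'].
    + exists (length bs). rewrite attacker_new, parent_new, Hq0 by reflexivity.
      repeat split; auto; lia.
    + destruct (Root ltac:(discriminate)) as (h1 & Hh1 & Ah1 & Ph1). exists h1.
      rewrite attacker_old, parent_old by lia. repeat split; auto; lia.
Qed.

End ForkHonest.

Section ForkRelease.
Variables (n1 : nat) (c : list letter) (bs : list block) (ach hch : list nat).
Hypothesis FI : fork_inv n1 c bs ach hch.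
Local Notation a := (hd 0 ach).
Variable h1 : nat.
Hypotheses (Hh1 : 0 < h1 < length bs) (Ah1 : by_attacker bs h1 = false).
Hypothesis Ph1 : parent bs h1 = Some 0.

(* Attacker blocks are ancestors of the tip and honest blocks other than [h1] have honest
   parents, which are not ancestors of the tip. *)
Lemma referable_fork_root i : referable n1 bs a i = true -> i = h1.
Proof.
  destruct FI as [W _ _ Ha _ Anc AttAnc Hpar Uniq _ _ _ _ _ _ _ _].
  intros Hr. unfold referable in Hr.
  apply andb_true_iff in Hr as [[[Hr1 Hr2]%andb_true_iff _]%andb_true_iff _].
  apply negb_true_iff, memb_false_iff in Hr1. rewrite (ancestors_iff n1 bs a i W) in Hr1 by lia.
  destruct (parent bs i) as [x|] eqn:Pi; [|discriminate].
  apply (memb_ancestors n1 bs a x W) in Hr2; [|lia].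
  assert (Hi : 0 < i < length bs).
  { destruct (parent_lt _ _ W _ _ Pi). split; [lia|].
    destruct (le_lt_dec (length bs) i) as [Le|]; [|assumption].
    unfold parent in Pi. rewrite get_ge_length in Pi by exact Le. discriminate. }
  destruct (by_attacker bs i) eqn:Ai; [exfalso; apply Hr1, AttAnc; auto|].
  destruct (Hpar i Hi Ai) as [E|[p [E [Hp Ap]]]].
  - apply Uniq; auto.
  - rewrite Pi in E. injection E as <-. destruct (Anc x Hr2); [lia|congruence].
Qed.

Lemma referable_fork_h1 : referable n1 bs a h1 = is_pure c && Nat.leb (length ach) n1.
Proof.
  destruct FI as [W _ _ Ha _ Anc AttAnc _ Uniq Hh _ _ _ _ Pure Imp _].
  assert (NotA : ~ ancestor bs h1 a) by (intros HA; destruct (Anc h1 HA); [lia|congruence]).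
  assert (Dist : S (height bs a) - height bs h1 = length ach).
  { destruct (parent_lt _ _ W _ _ Ph1) as [_ ->]. rewrite Hh, (wf_genesis_height _ _ W). lia. }
  unfold referable. rewrite Ph1, Dist.
  replace (memb h1 (ancestors bs a)) with false
    by (symmetry; apply memb_false_iff; rewrite (ancestors_iff n1 bs a h1 W); auto; lia).
  replace (memb 0 (ancestors bs a)) with true
    by (symmetry; apply (memb_ancestors n1 bs a 0 W); [lia|apply (ancestor_genesis n1); auto; lia]).
  cbn [negb andb].
  destruct (is_pure c) eqn:Pc.
  - replace (forallb _ _) with true; [reflexivity|]. symmetry. apply forallb_forall.
    intros b Hb. apply (ancestors_iff n1 bs a b W) in Hb; [|lia].
    apply negb_true_iff, memb_false_iff. intros HIn. destruct (Anc b Hb) as [->|Ab].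
    + now rewrite (refs_genesis _ _ W) in HIn.
    + pose proof (refs_lt _ _ W _ _ HIn). pose proof (ancestor_le _ _ W _ _ Hb).
      assert (b < h1) by (apply (proj1 Pure eq_refl); auto; lia). lia.
  - destruct (Nat.leb (length ach) n1) eqn:Le; [|apply andb_false_r]. apply Nat.leb_le in Le.
    assert (NF : ~ attackers_first bs) by (rewrite <- Pure; discriminate).
    destruct (Imp NF) as [(h1' & x & Hh1' & Ah1' & Ph1' & Hx & Ax & Rx)|Gt]; [|lia].
    assert (h1' = h1) as -> by (apply Uniq; auto).
    replace (forallb _ _) with false; [reflexivity|]. symmetry. apply not_true_iff_false.
    rewrite forallb_forall. intros U.
    assert (Inx : In x (ancestors bs a)) by (apply (ancestors_iff n1 bs a x W); auto; lia).
    specialize (U x Inx). apply negb_true_iff, memb_false_iff in U. auto.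
Qed.

Lemma count_referable_fork :
  length (filter (referable n1 bs a) (seq 0 (length bs))) =
  if is_pure c && Nat.leb (length ach) n1 then 1 else 0.
Proof.
  destruct (is_pure c && Nat.leb (length ach) n1) eqn:Cond.
  - apply length_filter_single with h1.
    + apply seq_NoDup.
    + apply in_seq. lia.
    + now rewrite referable_fork_h1.
    + intros x _ Hx. now apply referable_fork_root.
  - apply length_filter_false. intros x _.
    destruct (referable n1 bs a x) eqn:E; [|reflexivity].
    pose proof (referable_fork_root x E) as ->. now rewrite referable_fork_h1, Cond in E.
Qed.

End ForkRelease.

Definition one_block : list block := [genesis; mkBlock 1 (Some 0) true 1 []].

(* The invariant already holds in the phase [One 1], which starts the fork phase. *)
Lemma fork_inv_one n1 : fork_inv n1 [LA] one_block [1] [].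
Proof.
  assert (W : well_formed n1 one_block) by exact (proj1 (state_ok_run n1 [LA])).
  assert (A1 : forall x, ancestor one_block x 1 -> x = 0 \/ x = 1).
  { intros x [->|[p [[= <-] [->|[p' [Hp' _]]]%ancestor_inv]]]%ancestor_inv; auto.
    discriminate. }
  assert (One : forall i, 0 < i < length one_block -> i = 1) by (cbn; lia).
  constructor; cbn [hd length hd_error]; try reflexivity.
  - exact W.
  - now intros i ->%One.
  - discriminate.
  - cbn; lia.
  - intros x [-> | ->]%A1; auto.
  - intros i ->%One _. constructor.
  - now intros i ->%One.
  - now intros i j ->%One.
  - now intros _ i ->%One.
  - discriminate.
  - split; [|reflexivity]. now intros _ i j _ ->%One.
  - intros NF. exfalso. apply NF. now intros i j _ ->%One.
  - now intros [].
Qed.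

Inductive first_cycle_inv n1 : list letter -> state -> Prop :=
| fci_start : first_cycle_inv n1 [] init_state
| fci_one : first_cycle_inv n1 [LA] (mkState one_block [1] 0 1 (One 1))
| fci_tie l : is_H l = true -> first_cycle_inv n1 [LA; l] (run n1 [LA; l])
| fci_fork c bs sec ach hch : fork_inv n1 c bs ach hch ->
    first_cycle_inv n1 c (mkState bs sec 0 1 (Fork ach hch)).

Lemma first_cycle_inv_step n1 c s l : first_cycle_inv n1 c s -> st_cycle (step n1 s l) = 1 ->
  first_cycle_inv n1 (c ++ [l]) (step n1 s l).
Proof.
  intros FC Hc. destruct FC as [| |l0 Hl0|c bs sec ach hch FI].
  - destruct l; try discriminate. apply fci_one.
  - destruct l; [|now apply fci_tie..].
    exact (fci_fork n1 _ _ _ _ _ (fork_inv_attack n1 [LA] one_block [1] [] [1] (fork_inv_one n1))).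
  - destruct l0, l; discriminate.
  - unfold step in *. rewrite mine_new_block in *.
    cbn [st_phase st_tip st_cycle st_blocks st_secret] in Hc |- *.
    destruct l.
    + now apply fci_fork, fork_inv_attack.
    + destruct (Nat.eqb (length ach - S (length hch)) 1); [discriminate|].
      now apply fci_fork, fork_inv_honest.
    + destruct (Nat.eqb (length ach - S (length hch)) 1); [discriminate|].
      now apply fci_fork, fork_inv_honest.
Qed.

Lemma first_cycle_inv_run n1 c : cycles c = 1 -> first_cycle_inv n1 c (run n1 c).
Proof.
  induction c as [|l c IH] using rev_ind; intros H; [apply fci_start|].
  pose proof (cycles_le_app c [l]). pose proof (cycles_ge_1 c).
  rewrite run_snoc. apply first_cycle_inv_step; [apply IH; lia|].
  now rewrite <- run_snoc, st_cycle_run.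
Qed.

Lemma split_first_cycle u : 2 <= cycles u ->
  exists c l r, u = c ++ l :: r /\ cycles c = 1 /\ cycles (c ++ [l]) = 2.
Proof.
  induction u as [|l u IH] using rev_ind; intros H; [cbn in H; lia|].
  destruct (le_lt_dec 2 (cycles u)) as [Le|Lt].
  - destruct (IH Le) as (c & l' & r & -> & H1 & H2).
    exists c, l', (r ++ [l]). now rewrite <- app_assoc.
  - exists u, l, []. pose proof (cycles_ge_1 u).
    destruct (cycles_snoc u l) as [E|[E _]]; repeat split; lia.
Qed.

Definition first_cycle_end n1 (c : list letter) (l : letter) : Prop :=
  after_first_cycle (run n1 (c ++ [l])) /\
  forall r, count_referable n1 (run n1 (c ++ [l])) = pattern_count n1 (c ++ l :: r).

Lemma step_fork_release n1 bs sec ach hch l :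
  st_cycle (step n1 (mkState bs sec 0 1 (Fork ach hch)) l) = 2 ->
  is_H l = true /\ length ach - S (length hch) = 1 /\
  step n1 (mkState bs sec 0 1 (Fork ach hch)) l =
  mkState (bs ++ [new_block n1 bs sec false 1 (hd 0 hch)]) [] (hd 0 ach) 2 Idle.
Proof.
  unfold step. rewrite mine_new_block. cbn [st_phase st_tip st_cycle st_blocks st_secret].
  destruct l; [discriminate| |];
    (destruct (Nat.eqb (length ach - S (length hch)) 1) eqn:Eq; [|discriminate]);
    apply Nat.eqb_eq in Eq; auto.
Qed.

Lemma pattern_count_release n1 c l r (ach hch : list nat) :
  is_H l = true -> is_pure (c ++ [l]) = true -> length ach - S (length hch) = 1 ->
  length ach = count_A c -> length hch = count_H c ->
  pattern_count n1 (c ++ l :: r) = if Nat.leb (length ach) n1 then 1 else 0.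
Proof.
  intros Hl P Eq NA NH. pose proof (is_pure_starts_AH _ r P) as St.
  rewrite <- app_assoc in St. cbn [app] in St.
  rewrite count_A_app, count_H_app, <- NA, <- NH in St. destruct l; try discriminate; cbn in St.
  all: rewrite Nat.add_0_r in St; apply pattern_count_starts_AH; [lia|].
  all: now replace (pred (length ach)) with (length hch + 1) by lia.
Qed.

Lemma first_cycle_end_fork n1 c l bs sec ach hch :
  fork_inv n1 c bs ach hch -> run n1 c = mkState bs sec 0 1 (Fork ach hch) ->
  cycles (c ++ [l]) = 2 -> first_cycle_end n1 c l.
Proof.
  intros FI Hrun H2. rewrite <- (st_cycle_run n1), run_snoc, Hrun in H2.
  destruct (step_fork_release _ _ _ _ _ _ H2) as (Hl & Eq & Hstep).
  pose proof (fork_inv_honest n1 c bs ach hch sec l Hl FI) as FI'.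
  unfold first_cycle_end. rewrite run_snoc, Hrun, Hstep. split.
  - constructor; try reflexivity. apply (fi_cycle _ _ _ _ _ FI').
  - intros r. unfold count_referable. cbn [st_blocks st_tip].
    destruct (fi_honest_root _ _ _ _ _ FI' ltac:(discriminate)) as (h1 & Hh1 & Ah1 & Ph1).
    rewrite (count_referable_fork _ _ _ _ _ FI' h1) by assumption.
    destruct (is_pure (c ++ [l])) eqn:P.
    + symmetry. apply (pattern_count_release n1 c l r ach hch); auto.
      * apply (fi_count_A _ _ _ _ _ FI).
      * apply (fi_count_H _ _ _ _ _ FI).
    + symmetry. apply pattern_count_impure; auto.
      * now rewrite <- (st_cycle_run n1), Hrun.
      * now rewrite <- (st_cycle_run n1), run_snoc, Hrun.
Qed.

Lemma first_cycle_end_H n1 l : is_H l = true -> first_cycle_end n1 [] l.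
Proof.
  intros Hl. split; [|intros r; cbn [app]; rewrite pattern_count_H by exact Hl].
  - destruct l; try discriminate; constructor; try reflexivity;
      intros i Hi; cbn in Hi; now replace i with 1 by lia.
  - destruct l; try discriminate; vm_compute; reflexivity.
Qed.

Lemma first_cycle_end_tie n1 l0 l : 2 <= n1 -> is_H l0 = true -> first_cycle_end n1 [LA; l0] l.
Proof.
  intros Hn1 Hl0. destruct n1 as [|[|k]]; [lia|lia|].
  split; [|intros r; cbn [app]; rewrite pattern_count_AH by exact Hl0].
  - destruct l0, l; try discriminate; constructor; try reflexivity;
      intros i Hi; cbn in Hi; (assert (i = 1 \/ i = 2 \/ i = 3) as [-> | [-> | ->]] by lia);
      reflexivity.
  - destruct l0, l; try discriminate; vm_compute; reflexivity.
Qed.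

Lemma first_cycle_end_holds n1 c l : 2 <= n1 -> cycles c = 1 -> cycles (c ++ [l]) = 2 ->
  first_cycle_end n1 c l.
Proof.
  intros Hn1 H1 H2. pose proof (first_cycle_inv_run n1 c H1) as FC.
  remember (run n1 c) as s eqn:Hs. destruct FC as [| |l0 Hl0|c' bs sec ach hch FI].
  - destruct l; [discriminate|now apply first_cycle_end_H..].
  - destruct l; discriminate.
  - now apply first_cycle_end_tie.
  - now apply first_cycle_end_fork with bs sec ach hch.
Qed.

Theorem V_eq_pattern_count n1 u m : 2 <= n1 -> 1 <= m -> completes u (S m) = true ->
  V n1 u = pattern_count n1 u.
Proof.
  intros Hn1 Hm Hu. apply completes_iff in Hu.
  assert (Hc : cycles u = S (S m)) by (unfold cycles; now rewrite Hu).
  destruct (split_first_cycle u) as (c & l & r & -> & H1 & H2); [lia|].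
  destruct (first_cycle_end_holds n1 c l Hn1 H1 H2) as [After Count].
  assert (Er : run n1 (c ++ l :: r) = fold_left (step n1) r (run n1 (c ++ [l]))).
  { unfold run. rewrite <- fold_left_app, <- app_assoc. reflexivity. }
  rewrite V_V_state, Er, V_state_later, (Count r); auto.
  - apply state_ok_run.
  - rewrite <- Er, st_cycle_run. lia.
Qed.

Open Scope R_scope.

(** * The expectation of V *)

Lemma sum_f_R0_single (f : nat -> R) M N0 : (N0 <= M)%nat ->
  (forall N, (N <= M)%nat -> N <> N0 -> f N = 0) -> sum_f_R0 f M = f N0.
Proof.
  intros H1 H2. induction M as [|M IH].
  - now replace N0 with O by lia.
  - cbn. destruct (Nat.eq_dec N0 (S M)) as [->|Hne].
    + rewrite sum_eq_R0; [ring|]. intros N HN. apply H2; lia.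
    + rewrite IH, (H2 (S M)); try lia; [ring|]. intros N HN. apply H2; lia.
Qed.

Lemma infinite_sum_of_geometric_gap (s : nat -> R) l C r M0 : 0 <= r < 1 ->
  (forall M, (M0 <= M)%nat -> 0 <= l - sum_f_R0 s M <= C * r ^ M) -> infinite_sum s l.
Proof.
  intros Hr Hgap eps Heps.
  destruct (Rle_lt_dec C 0) as [HC|HC].
  - exists M0. intros M HM. specialize (Hgap M HM). pose proof (pow_le r M (proj1 Hr)).
    unfold Rdist. rewrite Rabs_minus_sym, Rabs_right by lra. nra.
  - destruct (pow_lt_1_zero r ltac:(rewrite Rabs_right; lra) (eps / C)
                (Rdiv_lt_0_compat _ _ Heps HC)) as [N0 HN0].
    exists (Nat.max N0 M0). intros M HM. specialize (Hgap M ltac:(lia)).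
    specialize (HN0 M ltac:(lia)). rewrite Rabs_right in HN0 by (apply Rle_ge, pow_le; lra).
    assert (C * r ^ M < eps).
    { apply (Rmult_lt_compat_l C) in HN0; [|exact HC].
      now replace (C * (eps / C)) with eps in HN0 by (field; lra). }
    unfold Rdist. rewrite Rabs_minus_sym, Rabs_right by lra. lra.
Qed.

Definition stopped_count (n1 m N : nat) (u : list letter) : R :=
  if completes (firstn N u) (S m) then INR (pattern_count n1 (firstn N u)) else 0.

(* Whether a word of length [M] has completed [m+1] cycles after [N] letters and, if so,
   its pattern count, depend only on its first [N] letters. *)
Lemma sum_words_stopped p q gamma n1 m N M : p + q = 1 -> (N <= M)%nat ->
  sum_words N (fun v =>
    if completes v (S m) then wprob p q gamma v * INR (pattern_count n1 v) else 0) =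
  sum_words M (fun u => wprob p q gamma u * stopped_count n1 m N u).
Proof.
  intros Hpq HNM. replace M with (N + (M - N))%nat by lia.
  rewrite sum_words_add_len. apply sum_words_ext_len. intros v Hv.
  rewrite (sum_words_ext _ _ (fun w =>
    (wprob p q gamma v * stopped_count n1 m N v) * wprob p q gamma w)).
  - rewrite sum_words_scal, sum_words_wprob by exact Hpq. unfold stopped_count.
    rewrite firstn_all2 by lia. destruct (completes v (S m)); ring.
  - intros w. rewrite wprob_app. unfold stopped_count.
    rewrite firstn_app, firstn_all2, Hv, Nat.sub_diag, app_nil_r by lia. ring.
Qed.

Lemma stopped_count_sum_bound n1 m u (t : R) : 1 <= t ->
  0 <= INR (pattern_count n1 u) - sum_f_R0 (fun N => stopped_count n1 m N u) (length u) <=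
  t ^ (2 * count_A u + m) / t ^ length u.
Proof.
  intros Ht. assert (Tp : 0 < t ^ length u) by (apply pow_lt; lra).
  assert (B0 : 0 <= t ^ (2 * count_A u + m) / t ^ length u)
    by (apply Rmult_le_pos; [apply pow_le; lra|left; now apply Rinv_0_lt_compat]).
  destruct (classic (exists N0, (N0 <= length u)%nat /\ completes (firstn N0 u) (S m) = true))
    as [[N0 [HN0 C0]]|NC].
  - rewrite (sum_f_R0_single _ _ N0 HN0).
    + unfold stopped_count. rewrite C0, pattern_count_firstn by
        (auto; apply completes_iff in C0; unfold cycles; rewrite C0; cbn; lia). lra.
    + intros N HN Hne. unfold stopped_count. destruct (completes (firstn N u) (S m)) eqn:E; auto.
      exfalso. apply Hne. now apply (completes_unique u (S m)).
  - rewrite sum_eq_R0.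
    2: { intros N HN. unfold stopped_count.
         destruct (completes (firstn N u) (S m)) eqn:E; [exfalso; eauto|reflexivity]. }
    assert (Hlen : (length u <= 2 * count_A u + m)%nat).
    { enough (S (length u) <= 2 * count_A u + S m)%nat by lia.
      apply length_bound_incomplete. intros N HN.
      destruct (completes (firstn N u) (S m)) eqn:E; [exfalso; eauto|reflexivity]. }
    assert (1 <= t ^ (2 * count_A u + m) / t ^ length u).
    { apply (Rmult_le_reg_r (t ^ length u)); [exact Tp|].
      unfold Rdiv. rewrite Rmult_assoc, Rinv_l, Rmult_1_l, Rmult_1_r by lra.
      now apply Rle_pow. }
    pose proof (le_INR _ _ (pattern_count_le_1 n1 u)). pose proof (pos_INR (pattern_count n1 u)).
    cbn in *. lra.
Qed.

Lemma sum_list_pattern_probs p q k : p * q <> 1 ->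
  sum_list (map (fun L => q ^ L * p ^ pred L) (seq 2 k)) =
  p * q ^ 2 * (1 - (p * q) ^ k) / (1 - p * q).
Proof.
  intros Hpq. induction k as [|k IH].
  - unfold sum_list; cbn. field. lra.
  - rewrite seq_S, map_app, sum_list_app, IH. unfold sum_list at 1; cbn.
    replace (2 + k)%nat with (S (S k)) by lia. cbn. rewrite Rpow_mult_distr. field. lra.
Qed.

Lemma sum_words_pattern_count p q gamma n1 M : p + q = 1 -> (2 * n1 <= M)%nat ->
  sum_words M (fun u => wprob p q gamma u * INR (pattern_count n1 u)) =
  sum_list (map (fun L => q ^ L * p ^ pred L) (seq 2 (n1 - 1))).
Proof.
  intros Hpq HM. unfold pattern_count.
  rewrite (sum_words_ext M _ (fun u => wprob p q gamma u *
      sum_list (map (fun L => if starts_AH L (pred L) u then 1 else 0) (seq 2 (n1 - 1))))).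
  2: { intros u. now rewrite INR_length_filter. }
  rewrite sum_words_sum_list. f_equal. apply map_ext_in. intros L HL%in_seq.
  apply sum_words_starts_AH; [exact Hpq|lia].
Qed.

(* Exponential moment behind the tail estimate: a word [u] that has not completed [m+1]
   cycles has [length u <= 2 * count_A u + m] by [length_bound_incomplete]. *)
Lemma sum_words_tail_bound p q gamma m M t : 0 < t ->
  sum_words M (fun u => wprob p q gamma u * (t ^ (2 * count_A u + m) / t ^ M)) =
  t ^ m * ((q * t ^ 2 + p) / t) ^ M.
Proof.
  intros Ht.
  rewrite (sum_words_ext M _ (fun u =>
    (t ^ m / t ^ M) * (wprob p q gamma u * (t ^ 2) ^ count_A u))).
  - rewrite sum_words_scal, sum_words_wprob_pow. unfold Rdiv.
    rewrite Rpow_mult_distr, pow_inv. ring.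
  - intros u. rewrite pow_add, <- pow_mult. unfold Rdiv. ring.
Qed.

Section Expectation.
Variables (p q gamma : R) (n1 m : nat).
Hypotheses (p_add_q : p + q = 1) (Hn1 : (2 <= n1)%nat) (Hm : (1 <= m)%nat).

Lemma EV_term_pattern_count N : EV_term n1 p q gamma m N =
  sum_words N (fun v =>
    if completes v (S m) then wprob p q gamma v * INR (pattern_count n1 v) else 0).
Proof.
  apply sum_words_ext. intros u. rewrite complete_cycles_completes.
  destruct (completes u (S m)) eqn:E; [|reflexivity]. now rewrite (V_eq_pattern_count n1 u m).
Qed.

Lemma EV_partial_sum M K : (K <= M)%nat ->
  sum_f_R0 (EV_term n1 p q gamma m) K =
  sum_words M (fun u => wprob p q gamma u * sum_f_R0 (fun N => stopped_count n1 m N u) K).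
Proof.
  induction K as [|K IH]; intros HK; cbn [sum_f_R0].
  - now rewrite EV_term_pattern_count, (sum_words_stopped _ _ _ _ _ _ M p_add_q).
  - rewrite IH, EV_term_pattern_count, (sum_words_stopped _ _ _ _ _ _ M p_add_q),
      <- sum_words_add by lia.
    apply sum_words_ext. intros u. ring.
Qed.

Hypotheses (q_pos : 0 < q) (q_lt_p : q < p) (gamma_range : 0 <= gamma <= 1).

(* With [t = 1 / (2 q)] the tail bound decays like [(1/2 + 2 p q) ^ M], and
   [p q < 1/4] because [q < 1/2 < p]. *)
Lemma EV_partial_sum_gap M : (2 * n1 <= M)%nat ->
  0 <= p * q ^ 2 * (1 - (p * q) ^ (n1 - 1)) / (1 - p * q) - sum_f_R0 (EV_term n1 p q gamma m) M
    <= (/ (2 * q)) ^ m * (1 / 2 + 2 * p * q) ^ M.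
Proof.
  intros HM. set (t := / (2 * q)).
  assert (Ht : 1 < t) by (unfold t; rewrite <- Rinv_1; apply Rinv_lt_contravar; lra).
  assert (Hr : (q * t ^ 2 + p) / t = 1 / 2 + 2 * p * q) by (unfold t; field; lra).
  rewrite (EV_partial_sum M M), <- sum_list_pattern_probs by (auto; nra).
  rewrite <- (sum_words_pattern_count p q gamma n1 M), <- Hr,
    <- (sum_words_tail_bound p q gamma m M t) by (auto; lra).
  set (P := wprob p q gamma).
  assert (Bound : forall u, length u = M ->
    0 <= INR (pattern_count n1 u) - sum_f_R0 (fun N => stopped_count n1 m N u) M <=
    t ^ (2 * count_A u + m) / t ^ M)
    by (intros u <-; apply stopped_count_sum_bound; lra).
  assert (HP : forall u, 0 <= P u) by (intros; apply wprob_ge0; lra).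
  assert (Lower : sum_words M (fun u => P u * sum_f_R0 (fun N => stopped_count n1 m N u) M) <=
                  sum_words M (fun u => P u * INR (pattern_count n1 u))).
  { apply sum_words_le. intros u Hu. apply Rmult_le_compat_l; [apply HP|].
    specialize (Bound u Hu). lra. }
  assert (Upper : sum_words M (fun u => P u * INR (pattern_count n1 u)) <=
    sum_words M (fun u => P u * sum_f_R0 (fun N => stopped_count n1 m N u) M +
                          P u * (t ^ (2 * count_A u + m) / t ^ M))).
  { apply sum_words_le. intros u Hu. specialize (Bound u Hu). specialize (HP u). nra. }
  rewrite sum_words_add in Upper. lra.
Qed.

End Expectation.

Theorem proposition13 (p q gamma : R) (n1 m : nat) :
  0 < q -> q < p -> p + q = 1 -> 0 <= gamma <= 1 ->
  (2 <= n1)%nat -> (1 <= m)%nat ->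
  infinite_sum (fun N => EV_term n1 p q gamma m N)
    (p * q ^ 2 * (1 - (p * q) ^ (n1 - 1)) / (1 - p * q)).
Proof.
  intros Hq Hqp Hpq Hg Hn1 Hm.
  apply (infinite_sum_of_geometric_gap _ _ ((/ (2 * q)) ^ m) (1 / 2 + 2 * p * q) (2 * n1)).
  - split; nra.
  - intros M HM. now apply EV_partial_sum_gap.
Qed.
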